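(* Let $\nu_0=0$, $s>0$, $\gamma\ge0$, $u>0$, and let $g_\infty=\lim_{r\to\infty}g_r$ and $y_\infty(y_0)=\lim_{t\to\infty}y(t;y_0)$. Then $g_\infty(y_\infty(1))=1$, and for all $y_0\in[0,1)$: (i) if $0<u<s$, or $u=s<\gamma$, then $g_\infty(y_\infty(y_0))=0$; (ii) if $u>\check u$, or $s\ge\gamma$ and $s\le u\le\check u$, then $g_\infty(y_\infty(y_0))=1$; (iii) if $s<\gamma$ and $s<u\le\check u$, then $g_\infty(y_\infty(y_0))=0$ if $y_0\le\bar y_3$, and $g_\infty(y_\infty(y_0))=1$ if $y_0>\bar y_3$.
   Context: $y(t;y_0)$ solves $\dot y=-y(1-y)[s+\gamma(1-y)]+u(1-y)$, $y(0)=y_0$. For $\gamma>0$: $\check u=\frac1\gamma\big(\frac{s+\gamma}2\big)^2$, $\sigma=(1+s/\gamma)^2-4u/\gamma$, and, when $\sigma\ge0$, $\bar y_3=\frac12(1+\frac s\gamma+\sqrt\sigma)$. For $\gamma=0$, set $\check u=+\infty$. Embedded ASG process $(a_r)_{r\ge0}$: a random finite rooted tree started from a single unmarked root. Independently at each leaf: at rate $s$, two children (left, right) are attached; at rate $\gamma$, three children (left, middle, right) are attached; at rate $u$, one child is attached and the leaf is marked $\times$. Typing: vertex types propagate from the leaf types towards the root. A $\times$-marked vertex has type 1; an outdegree-2 vertex has type 1 iff both children have type 1; an outdegree-3 vertex has type 0 iff its left child has type 0 or its middle and right children both have type 0. Ancestral leaf $\lambda_v$: a leaf is its own ancestral leaf.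 For outdegree 2, take $\lambda$ of the right child if it has type 0, else $\lambda$ of the left child. For outdegree 3, take $\lambda$ of the right child if the middle and right children both have type 0, else $\lambda$ of the left child. For outdegree 1, take $\lambda$ of the child. $g_r(y_0)$ is the probability that the ancestral leaf of the root of $a_r$ has type 1 when the leaves are typed independently, each with type 1 with probability $y_0$. *)

From Stdlib Require Import Reals Lra List Bool.
From Coquelicot Require Import Coquelicot.
Import ListNotations.
Open Scope R_scope.

Definition drift (s g u yv : R) : R :=
  - yv * (1 - yv) * (s + g * (1 - yv)) + u * (1 - yv).

Definition IsSolution (s g u : R) (y : R -> R -> R) : Prop :=
  forall y0, 0 <= y0 <= 1 ->
    y y0 0 = y0 /\ forall t, 0 <= t -> is_derive (y y0) t (drift s g u (y y0 t)).

Definition ucheck (s g : R) : Rbar :=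
  if Req_EM_T g 0 then p_infty else Finite ((1 / g) * ((s + g) / 2) ^ 2).
Definition sigma (s g u : R) : R := (1 + s / g) ^ 2 - 4 * u / g.
Definition ybar3 (s g u : R) : R := / 2 * (1 + s / g + sqrt (sigma s g u)).

(** Embedded ASG trees *)
Inductive tree : Type :=
| Leaf : tree
| Mark : tree -> tree
| Node2 : tree -> tree -> tree
| Node3 : tree -> tree -> tree -> tree.

Fixpoint nleaves (T : tree) : nat :=
  match T with
  | Leaf => 1%nat
  | Mark c => nleaves c
  | Node2 a b => (nleaves a + nleaves b)%nat
  | Node3 a b c => (nleaves a + nleaves b + nleaves c)%nat
  end.

Fixpoint trans (s g u : R) (T : tree) : list (R * tree) :=
  match T with
  | Leaf => [(s, Node2 Leaf Leaf); (g, Node3 Leaf Leaf Leaf); (u, Mark Leaf)]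
  | Mark c => map (fun p => (fst p, Mark (snd p))) (trans s g u c)
  | Node2 a b =>
      map (fun p => (fst p, Node2 (snd p) b)) (trans s g u a)
   ++ map (fun p => (fst p, Node2 a (snd p))) (trans s g u b)
  | Node3 a b c =>
      map (fun p => (fst p, Node3 (snd p) b c)) (trans s g u a)
   ++ map (fun p => (fst p, Node3 a (snd p) c)) (trans s g u b)
   ++ map (fun p => (fst p, Node3 a b (snd p))) (trans s g u c)
  end.

Definition totrate (s g u : R) (T : tree) : R := (s + g + u) * INR (nleaves T).

(* jump-chain paths of n steps from a single leaf:
   (probability of the path in the embedded chain, list of the successive
    exponential holding rates, tree reached) *)
Fixpoint paths (s g u : R) (n : nat) : list (R * list R * tree) :=
  match n with
  | O => [(1, [], Leaf)]
  | S n' =>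
      flat_map (fun q =>
        let '(w, rs, T) := q in
        map (fun p => (w * fst p / totrate s g u T, rs ++ [totrate s g u T], snd p))
            (trans s g u T))
        (paths s g u n')
  end.

(* P(E_1 + ... + E_k <= r) for independent E_i ~ Exp(l_i), ls = [l_1;...;l_k] *)
Fixpoint hypoCDF (ls : list R) (r : R) : R :=
  match ls with
  | [] => 1
  | l :: ls' => RInt (fun x => l * exp (- (l * x)) * hypoCDF ls' (r - x)) 0 r
  end.

(** Typing and ancestral leaf; leaves typed left-to-right by a list of booleans
    (true = type 1) *)
Fixpoint typ (T : tree) (l : list bool) : bool :=
  match T with
  | Leaf => hd false l
  | Mark _ => true
  | Node2 a b => typ a (firstn (nleaves a) l) && typ b (skipn (nleaves a) l)
  | Node3 a b c =>
      let la := firstn (nleaves a) l in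
      let l' := skipn (nleaves a) l in
      let lb := firstn (nleaves b) l' in
      let lc := skipn (nleaves b) l' in
      negb (negb (typ a la) || (negb (typ b lb) && negb (typ c lc)))
  end.

Fixpoint anctyp (T : tree) (l : list bool) : bool :=
  match T with
  | Leaf => hd false l
  | Mark c => anctyp c l
  | Node2 a b =>
      let la := firstn (nleaves a) l in
      let lb := skipn (nleaves a) l in
      if negb (typ b lb) then anctyp b lb else anctyp a la
  | Node3 a b c =>
      let la := firstn (nleaves a) l in
      let l' := skipn (nleaves a) l in
      let lb := firstn (nleaves b) l' in
      let lc := skipn (nleaves b) l' in
      if negb (typ b lb) && negb (typ c lc) then anctyp c lc else anctyp a la
  end.

Fixpoint allbools (n : nat) : list (list bool) :=
  match n with
  | O => [[]]
  | S n' => flat_map (fun l => [true :: l; false :: l]) (allbools n')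
  end.

Fixpoint bweight (y0 : R) (l : list bool) : R :=
  match l with
  | [] => 1
  | b :: l' => (if b then y0 else 1 - y0) * bweight y0 l'
  end.

Definition hanc (T : tree) (y0 : R) : R :=
  fold_right Rplus 0
    (map (fun l => bweight y0 l * (if anctyp T l then 1 else 0)) (allbools (nleaves T))).

(* contribution of the configurations reached after exactly n jumps by time r *)
Definition gterm (s g u r y0 : R) (n : nat) : R :=
  fold_right Rplus 0
    (map (fun q => let '(w, rs, T) := q in
                   w * (hypoCDF rs r - hypoCDF (rs ++ [totrate s g u T]) r) * hanc T y0)
         (paths s g u n)).

Definition gr (s g u r y0 : R) : R := Series (gterm s g u r y0).

Definition ginf_yinf (s g u : R) (y : R -> R -> R) (y0 v : R) : Prop :=
  exists yi : R, is_lim (y y0) p_infty yi /\ is_lim (fun r => gr s g u r yi) p_infty v.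

From Pilot Require Import Defs.
From Stdlib Require Import Reals Lra Lia List Classical.
From Coquelicot Require Import Coquelicot.
Import ListNotations.
Open Scope R_scope.

(* At an equilibrium [y] of the ODE, i.e. a zero of [drift], the probability that the root of the
   tree has type 1 is harmonic for the tree-growth process, whereas the probability that the
   ancestral leaf has type 1 is harmonic up to a killing at rate [(1 - y) (s + g (1 - y))].
   After [n] jumps the tree has at most [2 n + 1] leaves, so the expected ancestral probability
   decays at least like [prod_(k < n) (1 - b / (2 k + 1))], which tends to 0 since the odd harmonic
   series diverges; as the [n]-th jump time tends to infinity, [g_r(y) -> 0] for [0 <= y < 1].
   For [y = 1] every vertex has type 1, and [g_r(1) = 1] because the process does not explode:
   the Laplace transform of the [n]-th jump time is at most [C(2n, n) / 4 ^ n].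
   Finally [drift y = (1 - y) (g y^2 - (s + g) y + u)]: the solution is monotone and converges
   either to 1 or to a root in [(0, 1)] of the quadratic factor, according to its sign pattern in
   each parameter regime. *)

Lemma continuous_of_ex_derive (f : R -> R) x : ex_derive f x -> continuous f x.
Proof. exact (ex_derive_continuous (V := R_NormedModule) f x). Qed.

Lemma continuous_exp_scal (a x : R) : continuous (fun z => exp (a * z)) x.
Proof. apply continuous_of_ex_derive. auto_derive. auto. Qed.

Lemma ex_RInt_of_continuous (f : R -> R) a b : (forall x, continuous f x) -> ex_RInt f a b.
Proof. intros Hf. apply (ex_RInt_continuous (V := R_CompleteNormedModule)). auto. Qed.

Lemma RInt_exp_scal (a r : R) : a <> 0 ->
  RInt (fun z => exp (a * z)) 0 r = (exp (a * r) - 1) / a.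
Proof.
  intros Ha. apply is_RInt_unique.
  replace ((exp (a * r) - 1) / a) with (minus (exp (a * r) / a) (exp (a * 0) / a))
    by (unfold minus, plus, opp; simpl; rewrite Rmult_0_r, exp_0; field; auto).
  apply (is_RInt_derive (fun z => exp (a * z) / a)).
  - intros x _. auto_derive; auto. field. auto.
  - intros x _. apply continuous_exp_scal.
Qed.

Lemma RInt_le_of_continuous (f h : R -> R) r : 0 <= r ->
  (forall x, continuous f x) -> (forall x, continuous h x) ->
  (forall x, 0 < x < r -> f x <= h x) -> RInt f 0 r <= RInt h 0 r.
Proof. intros Hr Hf Hh H. apply RInt_le; auto; apply ex_RInt_of_continuous; auto. Qed.

Lemma RInt_scal_of_continuous (f : R -> R) a b (c : R) : (forall x, continuous f x) ->
  RInt (fun x => c * f x) a b = c * RInt f a b.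
Proof. intros Hf. apply (RInt_scal f a b c), ex_RInt_of_continuous, Hf. Qed.

Lemma RInt_reflect (f : R -> R) r : (forall x, continuous f x) ->
  RInt (fun x => f (r - x)) 0 r = RInt f 0 r.
Proof.
  intros Hf.
  assert (Hfr : forall x, continuous (fun y => f (r - y)) x).
  { intros x. apply (continuous_comp (fun y => r - y) f); auto.
    apply continuous_of_ex_derive. auto_derive. auto. }
  pose proof (RInt_comp (V := R_CompleteNormedModule) f (fun x => r - x) (fun _ => -1) 0 r) as Hc.
  rewrite Rminus_0_r, Rminus_diag in Hc.
  rewrite <- (opp_RInt_swap (V := R_CompleteNormedModule) f) in Hc by (apply ex_RInt_of_continuous, Hf).
  rewrite (RInt_ext _ (fun y => -1 * f (r - y))) in Hc by (intros; reflexivity).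
  rewrite RInt_scal_of_continuous in Hc by exact Hfr.
  unfold opp in Hc; simpl in Hc.
  specialize (Hc (fun x _ => Hf _)).
  assert (H : -1 * RInt (fun y => f (r - y)) 0 r = - RInt f 0 r).
  { apply Hc. intros x _. split; [auto_derive; auto; ring | apply continuous_const]. }
  lra.
Qed.

Lemma continuous_exp_scal_mult (f : R -> R) (a x : R) : continuous f x ->
  continuous (fun z => exp (a * z) * f z) x.
Proof. intros Hf. apply (continuous_mult (fun z => exp (a * z)) f); auto. apply continuous_exp_scal. Qed.

(* [exp_conv l r f = E[f (r - X); X <= r]] for [X ~ Exp(l)], written in the variable [r - X]. *)
Definition exp_conv (l r : R) (f : R -> R) : R :=
  l * exp (- (l * r)) * RInt (fun z => exp (l * z) * f z) 0 r.

Lemma hypoCDF_cons_of_continuous l ls r : (forall x, continuous (hypoCDF ls) x) ->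
  hypoCDF (l :: ls) r = exp_conv l r (hypoCDF ls).
Proof.
  intros Hc. simpl. unfold exp_conv.
  set (k := fun z => l * exp (- (l * (r - z))) * hypoCDF ls z).
  rewrite (RInt_ext _ (fun x => k (r - x)))
    by (intros x _; unfold k; replace (r - (r - x)) with x by ring; reflexivity).
  rewrite RInt_reflect.
  - rewrite <- RInt_scal_of_continuous by (intros; apply continuous_exp_scal_mult, Hc).
    apply RInt_ext. intros x _. unfold k.
    replace (- (l * (r - x))) with (- (l * r) + l * x) by ring. rewrite exp_plus. simpl. ring.
  - intros x. apply (continuous_mult (fun z => l * exp (- (l * (r - z)))) (hypoCDF ls)); auto.
    apply continuous_of_ex_derive. auto_derive. auto.
Qed.

Lemma continuous_hypoCDF ls x : continuous (hypoCDF ls) x.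
Proof.
  revert x. induction ls as [|l ls IH]; intros x.
  - apply continuous_const.
  - set (h := fun z => exp (l * z) * hypoCDF ls z).
    apply (continuous_ext (fun r => l * exp (- (l * r)) * RInt h 0 r)).
    { intros r. symmetry. apply hypoCDF_cons_of_continuous, IH. }
    apply (continuous_mult (fun r => l * exp (- (l * r))) (fun r => RInt h 0 r)).
    + apply continuous_of_ex_derive. auto_derive. auto.
    + apply continuous_of_ex_derive. eexists. apply (is_derive_RInt h (fun r => RInt h 0 r) 0 x).
      * apply filter_forall. intros b. apply (RInt_correct (V := R_CompleteNormedModule)).
        apply ex_RInt_of_continuous. intros; apply continuous_exp_scal_mult, IH.
      * apply continuous_exp_scal_mult, IH.
Qed.

Lemma hypoCDF_cons l ls r : hypoCDF (l :: ls) r = exp_conv l r (hypoCDF ls).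
Proof. apply hypoCDF_cons_of_continuous. intros. apply continuous_hypoCDF. Qed.

Lemma exp_conv_le l r (f h : R -> R) : 0 <= l -> 0 <= r ->
  (forall x, continuous f x) -> (forall x, continuous h x) ->
  (forall x, 0 < x < r -> f x <= h x) -> exp_conv l r f <= exp_conv l r h.
Proof.
  intros Hl Hr Hf Hh H. unfold exp_conv.
  apply Rmult_le_compat_l; [pose proof (exp_pos (- (l * r))); nra |].
  apply RInt_le_of_continuous; auto using continuous_exp_scal_mult.
  intros x Hx. pose proof (exp_pos (l * x)). pose proof (H x Hx). nra.
Qed.

Lemma exp_conv_lin l r c1 c2 (f h : R -> R) :
  (forall x, continuous f x) -> (forall x, continuous h x) ->
  exp_conv l r (fun z => c1 * f z + c2 * h z) = c1 * exp_conv l r f + c2 * exp_conv l r h.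
Proof.
  intros Hf Hh. unfold exp_conv.
  set (F := fun z => c1 * (exp (l * z) * f z)). set (H := fun z => c2 * (exp (l * z) * h z)).
  rewrite (RInt_ext _ (fun z => plus (F z) (H z)))
    by (intros; unfold F, H, plus; simpl; ring).
  rewrite (RInt_plus (V := R_CompleteNormedModule) F H);
    try (apply ex_RInt_of_continuous; intros; unfold F, H;
         apply (continuous_scal_r (K := R_AbsRing) (V := R_NormedModule)), continuous_exp_scal_mult; auto).
  unfold F, H. rewrite !RInt_scal_of_continuous by (intros; apply continuous_exp_scal_mult; auto).
  unfold plus; simpl. ring.
Qed.

Lemma exp_conv_exp l r a : l + a <> 0 ->
  exp_conv l r (fun z => exp (a * z)) = l / (l + a) * (exp (a * r) - exp (- (l * r))).
Proof.
  intros Hla. unfold exp_conv.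
  rewrite (RInt_ext _ (fun z => exp ((l + a) * z))) by (intros; rewrite <- exp_plus; f_equal; ring).
  rewrite RInt_exp_scal by auto.
  assert (E : exp (- (l * r)) * exp ((l + a) * r) = exp (a * r)) by (rewrite <- exp_plus; f_equal; ring).
  replace (l * exp (- (l * r)) * ((exp ((l + a) * r) - 1) / (l + a)))
    with (l / (l + a) * (exp (- (l * r)) * exp ((l + a) * r) - exp (- (l * r)))) by (field; auto).
  rewrite E. reflexivity.
Qed.

Lemma exp_conv_ext l r (f h : R -> R) : (forall z, f z = h z) -> exp_conv l r f = exp_conv l r h.
Proof. intros H. unfold exp_conv. f_equal. apply RInt_ext. intros. rewrite H. reflexivity. Qed.

Lemma exp_conv_affine_exp l r c1 c2 a : 0 < l -> l + a <> 0 ->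
  exp_conv l r (fun z => c1 + c2 * exp (a * z))
  = c1 * (1 - exp (- (l * r))) + c2 * (l / (l + a) * (exp (a * r) - exp (- (l * r)))).
Proof.
  intros Hl Hla.
  rewrite (exp_conv_ext _ _ _ (fun z => c1 * exp (0 * z) + c2 * exp (a * z)))
    by (intros; rewrite Rmult_0_l, exp_0; ring).
  rewrite exp_conv_lin by (intros; apply continuous_exp_scal).
  rewrite !exp_conv_exp by lra. rewrite Rmult_0_l, exp_0. field. lra.
Qed.

Lemma continuous_affine_exp c1 c2 a x : continuous (fun z => c1 + c2 * exp (a * z)) x.
Proof. apply continuous_of_ex_derive. auto_derive. auto. Qed.

Lemma hypoCDF_bounds ls r : List.Forall (fun l => 0 < l) ls -> 0 <= r -> 0 <= hypoCDF ls r <= 1.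
Proof.
  revert r. induction ls as [|l ls IH]; intros r Hp Hr; [simpl; lra|].
  apply List.Forall_cons_iff in Hp as [Hl Hp]. rewrite hypoCDF_cons.
  pose proof (exp_pos (- (l * r))).
  assert (Hl0 : l + 0 <> 0) by lra.
  pose proof (exp_conv_affine_exp l r 0 0 0 Hl Hl0) as E0.
  pose proof (exp_conv_affine_exp l r 1 0 0 Hl Hl0) as E1.
  split.
  - apply Rle_trans with (exp_conv l r (fun z => 0 + 0 * exp (0 * z))); [rewrite E0; lra|].
    apply exp_conv_le; auto using continuous_hypoCDF, continuous_affine_exp; try lra.
    intros x Hx. pose proof (IH x Hp ltac:(lra)). lra.
  - apply Rle_trans with (exp_conv l r (fun z => 1 + 0 * exp (0 * z))); [|rewrite E1; lra].
    apply exp_conv_le; auto using continuous_hypoCDF, continuous_affine_exp; try lra.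
    intros x Hx. pose proof (IH x Hp ltac:(lra)). lra.
Qed.

Lemma hypoCDF_app_le ls lam r : List.Forall (fun l => 0 < l) ls -> 0 < lam -> 0 <= r ->
  hypoCDF (ls ++ [lam]) r <= hypoCDF ls r.
Proof.
  revert r. induction ls as [|l ls IH]; intros r Hp Hlam Hr.
  - simpl app. pose proof (hypoCDF_bounds [lam] r ltac:(auto) Hr). simpl hypoCDF at 2. lra.
  - apply List.Forall_cons_iff in Hp as [Hl Hp].
    simpl app. rewrite !hypoCDF_cons.
    apply exp_conv_le; auto using continuous_hypoCDF; try lra.
    intros x Hx. apply IH; auto. lra.
Qed.

(* Laplace transform [E[exp (- th (X_1 + ... + X_k))]] of the hypoexponential distribution. *)
Definition hypo_laplace (th : R) (ls : list R) : R :=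
  fold_right (fun l acc => l / (l + th) * acc) 1 ls.

Lemma hypo_laplace_nonneg th ls : 0 < th -> List.Forall (fun l => 0 < l) ls -> 0 <= hypo_laplace th ls.
Proof.
  intros Hth. induction ls as [|l ls IH]; simpl; intros Hp; [lra|].
  apply List.Forall_cons_iff in Hp as [Hl Hp].
  apply Rmult_le_pos; auto. apply Rdiv_le_0_compat; lra.
Qed.

Lemma hypo_laplace_app th ls lam : hypo_laplace th (ls ++ [lam]) = hypo_laplace th ls * (lam / (lam + th)).
Proof. induction ls as [|l ls IH]; simpl; [|rewrite IH]; ring. Qed.

Lemma hypoCDF_chernoff th ls r : 0 < th -> List.Forall (fun l => 0 < l) ls -> 0 <= r ->
  hypoCDF ls r <= exp (th * r) * hypo_laplace th ls.
Proof.
  intros Hth. revert r. induction ls as [|l ls IH]; intros r Hp Hr.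
  - simpl. pose proof (exp_ineq1_le (th * r)). nra.
  - pose proof (hypo_laplace_nonneg th ls Hth (List.Forall_inv_tail Hp)) as HP.
    apply List.Forall_cons_iff in Hp as [Hl Hp].
    rewrite hypoCDF_cons.
    eapply Rle_trans.
    + apply (exp_conv_le _ _ _ (fun z => 0 + hypo_laplace th ls * exp (th * z)));
        auto using continuous_hypoCDF, continuous_affine_exp; try lra.
      intros x Hx. rewrite Rplus_0_l, Rmult_comm. apply IH; auto. lra.
    + rewrite exp_conv_affine_exp by lra. simpl.
      assert (0 <= l / (l + th)) by (apply Rdiv_le_0_compat; lra).
      pose proof (exp_pos (- (l * r))).
      assert (0 <= hypo_laplace th ls * (l / (l + th)) * exp (- (l * r)))
        by (apply Rmult_le_pos; [apply Rmult_le_pos|]; lra).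
      nra.
Qed.

Lemma hypoCDF_tail th ls r : 0 < th -> List.Forall (fun l => 2 * th <= l) ls -> 0 <= r ->
  1 - hypoCDF ls r <= 3 ^ length ls * exp (- (th * r)).
Proof.
  intros Hth. revert r. induction ls as [|l ls IH]; intros r Hp Hr.
  - simpl. pose proof (exp_pos (- (th * r))). lra.
  - apply List.Forall_cons_iff in Hp as [Hl Hp].
    set (B := 3 ^ length ls).
    assert (HB : 1 <= B) by (apply pow_R1_Rle; lra).
    rewrite hypoCDF_cons.
    assert (Hlow : exp_conv l r (fun z => 1 + - B * exp (- th * z)) <= exp_conv l r (hypoCDF ls)).
    { apply exp_conv_le; auto using continuous_hypoCDF, continuous_affine_exp; try lra.
      intros x Hx. pose proof (IH x Hp ltac:(lra)).
      replace (- th * x) with (- (th * x)) by ring. fold B in H. lra. }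
    rewrite exp_conv_affine_exp in Hlow by lra.
    assert (Hq : 0 <= l / (l + - th) <= 2).
    { split; [apply Rdiv_le_0_compat; lra|].
      apply Rmult_le_reg_r with (l + - th); [lra|]. field_simplify; lra. }
    assert (Hlt : exp (- (l * r)) <= exp (- th * r)).
    { replace (- th * r) with (- (th * r)) by ring.
      destruct (Req_dec r 0) as [->|]; [rewrite !Rmult_0_r; lra|]. left. apply exp_increasing. nra. }
    replace (- th * r) with (- (th * r)) in * by ring.
    pose proof (exp_pos (- (l * r))).
    set (q := l / (l + - th)) in *. set (d := exp (- (th * r)) - exp (- (l * r))).
    assert (Hd : q * d <= 2 * exp (- (th * r))) by (unfold d; nra).
    assert (HBd : B * (q * d) <= B * (2 * exp (- (th * r)))) by (apply Rmult_le_compat_l; lra).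
    assert (HBE : exp (- (th * r)) <= B * exp (- (th * r))) by (pose proof (exp_pos (- (th * r))); nra).
    simpl length. change (3 ^ S (length ls)) with (3 * B). fold d in Hlow. lra.
Qed.

Definition lsum (l : list R) : R := fold_right Rplus 0 l.

Lemma lsum_app a b : lsum (a ++ b) = lsum a + lsum b.
Proof. induction a as [|x a IH]; simpl; [|rewrite IH]; ring. Qed.

Lemma lsum_map_flat_map {A B} (f : B -> R) (h : A -> list B) l :
  lsum (map f (flat_map h l)) = lsum (map (fun x => lsum (map f (h x))) l).
Proof. induction l as [|x l IH]; simpl; [|rewrite map_app, lsum_app, IH]; reflexivity. Qed.

Lemma lsum_scal {A} (f : A -> R) c l : lsum (map (fun x => c * f x) l) = c * lsum (map f l).
Proof. induction l as [|x l IH]; simpl; [|rewrite IH]; ring. Qed.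

Lemma lsum_plus {A} (f h : A -> R) l :
  lsum (map (fun x => f x + h x) l) = lsum (map f l) + lsum (map h l).
Proof. induction l as [|x l IH]; simpl; [|rewrite IH]; ring. Qed.

Lemma lsum_ext_in {A} (f h : A -> R) l :
  (forall x, In x l -> f x = h x) -> lsum (map f l) = lsum (map h l).
Proof. intros H. f_equal. apply map_ext_in. auto. Qed.

Lemma lsum_le_in {A} (f h : A -> R) l :
  (forall x, In x l -> f x <= h x) -> lsum (map f l) <= lsum (map h l).
Proof.
  induction l as [|x l IH]; simpl; intros H; [lra|].
  apply Rplus_le_compat; auto.
Qed.

Definition Ebern (y : R) (n : nat) (f : list bool -> R) : R :=
  lsum (map (fun l => bweight y l * f l) (allbools n)).

Lemma Ebern_O y f : Ebern y 0 f = f [].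
Proof. unfold Ebern; simpl. ring. Qed.

Lemma Ebern_S y n f :
  Ebern y (S n) f = y * Ebern y n (fun l => f (true :: l)) + (1 - y) * Ebern y n (fun l => f (false :: l)).
Proof.
  unfold Ebern. simpl allbools. rewrite lsum_map_flat_map, <- !lsum_scal, <- lsum_plus.
  apply lsum_ext_in. intros x _. simpl. ring.
Qed.

Lemma Ebern_ext y n f h : (forall l, f l = h l) -> Ebern y n f = Ebern y n h.
Proof. intros H. apply lsum_ext_in. intros. rewrite H. reflexivity. Qed.

Lemma Ebern_affine y n a b f : Ebern y n (fun l => a + b * f l) = a + b * Ebern y n f.
Proof.
  revert f. induction n as [|n IH]; intros f.
  - rewrite !Ebern_O. reflexivity.
  - rewrite !Ebern_S, (IH (fun l => f (true :: l))), (IH (fun l => f (false :: l))). ring.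
Qed.

Lemma Ebern_const y n c : Ebern y n (fun _ => c) = c.
Proof. rewrite (Ebern_ext _ _ _ (fun _ => c + 0 * 0)), Ebern_affine by (intros; ring). ring. Qed.

Lemma Ebern_scal y n c f : Ebern y n (fun l => c * f l) = c * Ebern y n f.
Proof. rewrite (Ebern_ext _ _ _ (fun l => 0 + c * f l)), Ebern_affine by (intros; ring). ring. Qed.

Lemma Ebern_scal_r y n c f : Ebern y n (fun l => f l * c) = Ebern y n f * c.
Proof. rewrite (Ebern_ext _ _ _ (fun l => 0 + c * f l)), Ebern_affine by (intros; ring). ring. Qed.

Lemma Ebern_le y n f h : 0 <= y <= 1 -> (forall l, f l <= h l) -> Ebern y n f <= Ebern y n h.
Proof.
  intros Hy. revert f h. induction n as [|n IH]; intros f h H.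
  - rewrite !Ebern_O. auto.
  - rewrite !Ebern_S.
    pose proof (IH (fun l => f (true :: l)) (fun l => h (true :: l)) (fun l => H _)).
    pose proof (IH (fun l => f (false :: l)) (fun l => h (false :: l)) (fun l => H _)). nra.
Qed.

Lemma Ebern_split y n m (Phi : list bool -> list bool -> R) :
  Ebern y (n + m) (fun l => Phi (firstn n l) (skipn n l))
  = Ebern y n (fun l1 => Ebern y m (fun l2 => Phi l1 l2)).
Proof.
  revert Phi. induction n as [|n IH]; intros Phi.
  - rewrite Ebern_O. reflexivity.
  - change (S n + m)%nat with (S (n + m)). rewrite !Ebern_S.
    rewrite <- (IH (fun l1 l2 => Phi (true :: l1) l2)), <- (IH (fun l1 l2 => Phi (false :: l1) l2)).
    reflexivity.
Qed.

Definition indb (b : bool) : R := if b then 1 else 0.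

Lemma Ebern_indb_bounds y n (P : list bool -> bool) : 0 <= y <= 1 ->
  0 <= Ebern y n (fun l => indb (P l)) <= 1.
Proof.
  intros Hy. rewrite <- (Ebern_const y n 0) at 1. rewrite <- (Ebern_const y n 1).
  split; apply Ebern_le; auto; intros l; unfold indb; destruct (P l); lra.
Qed.

Definition typ_prob (y : R) (T : tree) : R := Ebern y (nleaves T) (fun l => indb (typ T l)).

Lemma hanc_Ebern T y : hanc T y = Ebern y (nleaves T) (fun l => indb (anctyp T l)).
Proof. reflexivity. Qed.

Lemma typ_of_anctyp T l : anctyp T l = true -> typ T l = true.
Proof.
  revert l. induction T as [|c IH|a IHa b IHb|a IHa b IHb c IHc]; intros l; simpl; auto.
  - destruct (typ b _) eqn:E; simpl; intros H.
    + rewrite (IHa _ H). reflexivity.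
    + rewrite (IHb _ H) in E. discriminate.
  - destruct (typ b _), (typ c _) eqn:Ec; simpl; intros H; try rewrite (IHa _ H); auto.
    rewrite (IHc _ H) in Ec. discriminate.
Qed.

Lemma anctyp_of_typ_false T l : typ T l = false -> anctyp T l = false.
Proof.
  intros H. destruct (anctyp T l) eqn:E; auto. rewrite (typ_of_anctyp T l E) in H. discriminate.
Qed.

Lemma typ_prob_Leaf y : typ_prob y Leaf = y.
Proof. unfold typ_prob, Ebern; simpl. ring. Qed.

Lemma hanc_Leaf y : hanc Leaf y = y.
Proof. unfold hanc; simpl. ring. Qed.

Lemma typ_prob_Mark y c : typ_prob y (Mark c) = 1.
Proof. unfold typ_prob. simpl typ. apply Ebern_const. Qed.

Lemma hanc_Mark y c : hanc (Mark c) y = hanc c y.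
Proof. reflexivity. Qed.

Lemma typ_prob_Node2 y a b : typ_prob y (Node2 a b) = typ_prob y a * typ_prob y b.
Proof.
  unfold typ_prob. simpl nleaves. simpl typ.
  rewrite (Ebern_split y _ _ (fun l1 l2 => indb (typ a l1 && typ b l2)%bool)).
  rewrite <- Ebern_scal_r. apply Ebern_ext. intros l1.
  rewrite <- Ebern_scal. apply Ebern_ext. intros l2.
  destruct (typ a l1), (typ b l2); simpl; ring.
Qed.

Lemma hanc_Node2 y a b : hanc (Node2 a b) y = typ_prob y b * hanc a y.
Proof.
  rewrite !hanc_Ebern. unfold typ_prob. simpl nleaves. simpl anctyp.
  rewrite (Ebern_split y _ _
    (fun l1 l2 => indb (if negb (typ b l2) then anctyp b l2 else anctyp a l1))).
  rewrite <- Ebern_scal. apply Ebern_ext. intros l1.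
  rewrite <- Ebern_scal_r. apply Ebern_ext. intros l2.
  destruct (typ b l2) eqn:E; simpl; [ring|].
  rewrite anctyp_of_typ_false by auto. simpl. ring.
Qed.

Lemma Ebern_split3 y a b c (Phi : list bool -> list bool -> list bool -> R) :
  Ebern y (nleaves (Node3 a b c))
    (fun l => Phi (firstn (nleaves a) l) (firstn (nleaves b) (skipn (nleaves a) l))
                  (skipn (nleaves b) (skipn (nleaves a) l)))
  = Ebern y (nleaves a) (fun la => Ebern y (nleaves b) (fun lb =>
      Ebern y (nleaves c) (fun lc => Phi la lb lc))).
Proof.
  simpl nleaves. rewrite <- Nat.add_assoc.
  rewrite (Ebern_split y _ _ (fun la l' => Phi la (firstn (nleaves b) l') (skipn (nleaves b) l'))).
  apply Ebern_ext. intros la. apply (Ebern_split y _ _ (Phi la)).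
Qed.

Lemma typ_prob_Node3 y a b c :
  typ_prob y (Node3 a b c) = typ_prob y a * (1 - (1 - typ_prob y b) * (1 - typ_prob y c)).
Proof.
  unfold typ_prob at 1. simpl typ.
  rewrite (Ebern_split3 y a b c
    (fun la lb lc => indb (negb (negb (typ a la) || negb (typ b lb) && negb (typ c lc)))%bool)).
  unfold typ_prob. rewrite <- Ebern_scal_r. apply Ebern_ext. intros la.
  rewrite (Ebern_ext _ _ _ (fun lb => indb (typ a la) * typ_prob y c
                                      + indb (typ a la) * (1 - typ_prob y c) * indb (typ b lb))).
  { rewrite Ebern_affine. unfold typ_prob. ring. }
  intros lb.
  rewrite (Ebern_ext _ _ _ (fun lc => indb (typ a la) * indb (typ b lb)
                                      + indb (typ a la) * (1 - indb (typ b lb)) * indb (typ c lc))).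
  { rewrite Ebern_affine. unfold typ_prob. ring. }
  intros lc. destruct (typ a la), (typ b lb), (typ c lc); simpl; ring.
Qed.

Lemma hanc_Node3 y a b c :
  hanc (Node3 a b c) y = (1 - (1 - typ_prob y b) * (1 - typ_prob y c)) * hanc a y.
Proof.
  rewrite !hanc_Ebern. simpl anctyp.
  rewrite (Ebern_split3 y a b c (fun la lb lc =>
    indb (if negb (typ b lb) && negb (typ c lc) then anctyp c lc else anctyp a la)%bool)).
  rewrite <- Ebern_scal. apply Ebern_ext. intros la.
  rewrite (Ebern_ext _ _ _ (fun lb => indb (anctyp a la) * typ_prob y c
                                      + indb (anctyp a la) * (1 - typ_prob y c) * indb (typ b lb))).
  { rewrite Ebern_affine. unfold typ_prob. ring. }
  intros lb.
  rewrite (Ebern_ext _ _ _ (fun lc => indb (anctyp a la) * indb (typ b lb)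
                                      + indb (anctyp a la) * (1 - indb (typ b lb)) * indb (typ c lc))).
  { rewrite Ebern_affine. unfold typ_prob. ring. }
  intros lc. destruct (typ b lb), (typ c lc) eqn:Ec; simpl; try ring.
  rewrite anctyp_of_typ_false by auto. simpl. ring.
Qed.

Lemma hanc_bounds T y : 0 <= y <= 1 -> 0 <= hanc T y <= 1.
Proof. intros Hy. apply Ebern_indb_bounds, Hy. Qed.

Lemma typ_prob_hanc_one T : typ_prob 1 T = 1 /\ hanc T 1 = 1.
Proof.
  induction T as [|c IH|a IHa b IHb|a IHa b IHb c IHc].
  - rewrite typ_prob_Leaf, hanc_Leaf. auto.
  - rewrite typ_prob_Mark, hanc_Mark. tauto.
  - rewrite typ_prob_Node2, hanc_Node2. destruct IHa as [-> ->], IHb as [-> _]. split; ring.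
  - rewrite typ_prob_Node3, hanc_Node3. destruct IHa as [-> ->], IHb as [-> _], IHc as [-> _]. split; ring.
Qed.

Section Rate_sums.

Variables s g u : R.

(* The generator of the jump process applied to [F], up to the term [- totrate T * F T]. *)
Definition rate_sum (F : tree -> R) (T : tree) : R :=
  lsum (map (fun p => fst p * F (snd p)) (trans s g u T)).

Lemma rate_sum_ext (F G : tree -> R) T : (forall T', F T' = G T') -> rate_sum F T = rate_sum G T.
Proof. intros H. apply lsum_ext_in. intros. rewrite H. reflexivity. Qed.

Lemma rate_sum_affine a b (F : tree -> R) T :
  rate_sum (fun T' => a + b * F T') T = a * rate_sum (fun _ => 1) T + b * rate_sum F T.
Proof.
  unfold rate_sum. rewrite <- !lsum_scal, <- lsum_plus. apply lsum_ext_in. intros. ring.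
Qed.

Lemma rate_sum_Mark (F : tree -> R) c : rate_sum F (Mark c) = rate_sum (fun c' => F (Mark c')) c.
Proof. unfold rate_sum. simpl. rewrite map_map. reflexivity. Qed.

Lemma rate_sum_Node2 (F : tree -> R) a b :
  rate_sum F (Node2 a b) = rate_sum (fun a' => F (Node2 a' b)) a + rate_sum (fun b' => F (Node2 a b')) b.
Proof. unfold rate_sum. simpl. rewrite map_app, lsum_app, !map_map. reflexivity. Qed.

Lemma rate_sum_Node3 (F : tree -> R) a b c :
  rate_sum F (Node3 a b c) = rate_sum (fun a' => F (Node3 a' b c)) a
    + rate_sum (fun b' => F (Node3 a b' c)) b + rate_sum (fun c' => F (Node3 a b c')) c.
Proof. unfold rate_sum. simpl. rewrite !map_app, !lsum_app, !map_map, Rplus_assoc. reflexivity. Qed.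

Lemma rate_sum_one T : rate_sum (fun _ => 1) T = totrate s g u T.
Proof.
  unfold totrate. induction T as [|c IH|a IHa b IHb|a IHa b IHb c IHc].
  - unfold rate_sum. simpl. ring.
  - rewrite rate_sum_Mark. exact IH.
  - rewrite rate_sum_Node2, IHa, IHb. simpl nleaves. rewrite plus_INR. ring.
  - rewrite rate_sum_Node3, IHa, IHb, IHc. simpl nleaves. rewrite !plus_INR. ring.
Qed.

Lemma typ_prob_harmonic y T : drift s g u y = 0 ->
  rate_sum (typ_prob y) T = totrate s g u T * typ_prob y T.
Proof.
  intros Hd. unfold totrate in *.
  induction T as [|c IH|a IHa b IHb|a IHa b IHb c IHc]; simpl nleaves.
  - unfold rate_sum. simpl. rewrite typ_prob_Node2, typ_prob_Node3, typ_prob_Mark, !typ_prob_Leaf.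
    unfold drift in Hd. simpl. nra.
  - rewrite rate_sum_Mark, typ_prob_Mark.
    rewrite (rate_sum_ext _ (fun _ => 1)) by (intros; apply typ_prob_Mark).
    rewrite rate_sum_one. unfold totrate. ring.
  - rewrite rate_sum_Node2, typ_prob_Node2.
    rewrite (rate_sum_ext _ (fun a' => 0 + typ_prob y b * typ_prob y a'))
      by (intros; rewrite typ_prob_Node2; ring).
    rewrite (rate_sum_ext (fun b' => typ_prob y (Node2 a b')) (fun b' => 0 + typ_prob y a * typ_prob y b'))
      by (intros; rewrite typ_prob_Node2; ring).
    rewrite !rate_sum_affine, IHa, IHb, plus_INR. ring.
  - rewrite rate_sum_Node3, typ_prob_Node3.
    set (Qa := typ_prob y a). set (Qb := typ_prob y b). set (Qc := typ_prob y c).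
    rewrite (rate_sum_ext _ (fun a' => 0 + (1 - (1 - Qb) * (1 - Qc)) * typ_prob y a'))
      by (intros; unfold Qa, Qb, Qc; rewrite typ_prob_Node3; ring).
    rewrite (rate_sum_ext (fun b' => typ_prob y (Node3 a b' c))
                          (fun b' => Qa * Qc + Qa * (1 - Qc) * typ_prob y b'))
      by (intros; unfold Qa, Qb, Qc; rewrite typ_prob_Node3; ring).
    rewrite (rate_sum_ext (fun c' => typ_prob y (Node3 a b c'))
                          (fun c' => Qa * Qb + Qa * (1 - Qb) * typ_prob y c'))
      by (intros; unfold Qa, Qb, Qc; rewrite typ_prob_Node3; ring).
    rewrite !rate_sum_affine, !rate_sum_one, IHa, IHb, IHc.
    unfold totrate, Qa, Qb, Qc. rewrite !plus_INR. ring.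
Qed.

End Rate_sums.

(* [kill_rate s g y = s (1 - y) + g (1 - y) ^ 2] is the rate at which a branching at the
   ancestral leaf passes the ancestry on to a fresh leaf of type 0. *)
Definition kill_rate (s g y : R) : R := (1 - y) * (s + g * (1 - y)).

Lemma kill_rate_bounds s g y : 0 <= s -> 0 <= g -> 0 <= y <= 1 -> 0 <= kill_rate s g y <= s + g.
Proof.
  intros Hs Hg Hy. unfold kill_rate.
  assert (0 <= g * (1 - y) <= g) by (split; nra). split; [apply Rmult_le_pos|]; nra.
Qed.

Lemma hanc_harmonic s g u y T : drift s g u y = 0 ->
  rate_sum s g u (fun T' => hanc T' y) T = (totrate s g u T - kill_rate s g y) * hanc T y.
Proof.
  intros Hd. unfold kill_rate.
  induction T as [|c IH|a IHa b IHb|a IHa b IHb c IHc].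
  - unfold rate_sum, totrate. simpl.
    rewrite hanc_Node2, hanc_Node3, hanc_Mark, !typ_prob_Leaf, !hanc_Leaf. simpl. ring.
  - rewrite rate_sum_Mark, hanc_Mark. exact IH.
  - rewrite rate_sum_Node2, hanc_Node2.
    rewrite (rate_sum_ext _ _ _ _ (fun a' => 0 + typ_prob y b * hanc a' y))
      by (intros; rewrite hanc_Node2; ring).
    rewrite (rate_sum_ext _ _ _ (fun b' => hanc (Node2 a b') y) (fun b' => 0 + hanc a y * typ_prob y b'))
      by (intros; rewrite hanc_Node2; ring).
    rewrite !rate_sum_affine, IHa, typ_prob_harmonic by exact Hd.
    unfold totrate. simpl nleaves. rewrite plus_INR. ring.
  - rewrite rate_sum_Node3, hanc_Node3.
    set (Ha := hanc a y). set (Qb := typ_prob y b). set (Qc := typ_prob y c).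
    rewrite (rate_sum_ext _ _ _ _ (fun a' => 0 + (1 - (1 - Qb) * (1 - Qc)) * hanc a' y))
      by (intros; unfold Ha, Qb, Qc; rewrite hanc_Node3; ring).
    rewrite (rate_sum_ext _ _ _ (fun b' => hanc (Node3 a b' c) y)
                          (fun b' => Qc * Ha + (1 - Qc) * Ha * typ_prob y b'))
      by (intros; unfold Ha, Qb, Qc; rewrite hanc_Node3; ring).
    rewrite (rate_sum_ext _ _ _ (fun c' => hanc (Node3 a b c') y)
                          (fun c' => Qb * Ha + (1 - Qb) * Ha * typ_prob y c'))
      by (intros; unfold Ha, Qb, Qc; rewrite hanc_Node3; ring).
    rewrite !rate_sum_affine, !rate_sum_one, IHa, !typ_prob_harmonic by exact Hd.
    unfold totrate, Ha, Qb, Qc. simpl nleaves. rewrite !plus_INR. ring.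
Qed.

(* [central_ratio n = C(2n, n) / 4 ^ n]. *)
Fixpoint central_ratio (n : nat) : R :=
  match n with
  | O => 1
  | S m => central_ratio m * (INR (2 * m + 1) / INR (2 * m + 2))
  end.

Lemma central_ratio_nonneg n : 0 <= central_ratio n.
Proof.
  induction n as [|n IH]; simpl; [lra|].
  apply Rmult_le_pos; auto. apply Rdiv_le_0_compat; [apply pos_INR | apply lt_0_INR; lia].
Qed.

Lemma rate_ratio_le (c k : R) (n : nat) : 0 < c -> 1 <= k <= INR (2 * n + 1) ->
  c * k / (c * k + c) <= INR (2 * n + 1) / INR (2 * n + 2).
Proof.
  intros Hc Hk.
  replace (INR (2 * n + 2)) with (INR (2 * n + 1) + 1) by (rewrite !plus_INR; simpl; ring).
  replace (c * k / (c * k + c)) with (k / (k + 1)) by (field; split; nra).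
  apply Rmult_le_reg_r with ((k + 1) * (INR (2 * n + 1) + 1)); [nra|].
  field_simplify; nra.
Qed.

Section Jump_chain.

Variables s g u : R.
Hypotheses (hs : 0 < s) (hg : 0 <= g) (hu : 0 <= u).

Lemma totrate_pos T : (1 <= nleaves T)%nat -> 0 < totrate s g u T.
Proof. intros H. unfold totrate. assert (1 <= INR (nleaves T)) by (apply (le_INR 1); lia). nra. Qed.

Lemma trans_spec T p : In p (trans s g u T) ->
  0 <= fst p /\ (nleaves T <= nleaves (snd p) <= nleaves T + 2)%nat.
Proof.
  revert p. induction T as [|c IH|a IHa b IHb|a IHa b IHb c IHc]; intros p Hp; simpl in Hp.
  - destruct Hp as [<-|[<-|[<-|[]]]]; simpl; split; (lra || lia).
  - apply in_map_iff in Hp as [q [<- Hq]]. destruct (IH q Hq). simpl. auto.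
  - apply in_app_iff in Hp as [Hp|Hp]; apply in_map_iff in Hp as [q [<- Hq]];
      [destruct (IHa q Hq) | destruct (IHb q Hq)]; simpl; split; auto; lia.
  - apply in_app_iff in Hp as [Hp|Hp]; [|apply in_app_iff in Hp as [Hp|Hp]];
      apply in_map_iff in Hp as [q [<- Hq]];
      [destruct (IHa q Hq) | destruct (IHb q Hq) | destruct (IHc q Hq)]; simpl; split; auto; lia.
Qed.

(* The last bound holds because the [i]-th holding rate is [(s + g + u) k] with [k <= 2 i + 1]
   leaves, and [k / (k + 1) <= (2 i + 1) / (2 i + 2)]. *)
Definition path_inv (n : nat) (w : R) (rs : list R) (T : tree) : Prop :=
  0 <= w /\ length rs = n /\ List.Forall (fun l => s + g + u <= l) rs /\
  (1 <= nleaves T <= 2 * n + 1)%nat /\ hypo_laplace (s + g + u) rs <= central_ratio n.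

Lemma paths_inv n w rs T : In (w, rs, T) (paths s g u n) -> path_inv n w rs T.
Proof.
  revert w rs T. induction n as [|n IH]; intros w rs T Hin.
  - destruct Hin as [E|[]]. inversion E; subst. repeat split; simpl; auto; lra.
  - simpl in Hin. apply in_flat_map in Hin as [[[w0 rs0] T0] [Hin0 Hin]].
    apply in_map_iff in Hin as [p [E Hp]]. inversion E; subst; clear E.
    destruct (IH _ _ _ Hin0) as (Hw & Hl & Hf & Hn & Hlap).
    destruct (trans_spec T0 p Hp) as [Hp0 Hnp].
    assert (HT : 1 <= INR (nleaves T0) <= INR (2 * n + 1)) by (split; [apply (le_INR 1) | apply le_INR]; lia).
    assert (Hlam : s + g + u <= totrate s g u T0) by (unfold totrate; nra).
    pose proof (totrate_pos T0 ltac:(lia)).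
    repeat split.
    + apply Rmult_le_pos; [apply Rmult_le_pos|]; auto. left. apply Rinv_0_lt_compat. auto.
    + rewrite length_app. simpl. lia.
    + apply List.Forall_app. split; auto.
    + lia.
    + lia.
    + rewrite hypo_laplace_app. simpl central_ratio.
      apply Rmult_le_compat; auto.
      * apply hypo_laplace_nonneg; [lra|]. eapply List.Forall_impl; [|exact Hf]. simpl; intros; lra.
      * apply Rdiv_le_0_compat; lra.
      * apply rate_ratio_le; [lra | auto].
Qed.

Lemma paths_rates_pos n w rs T : In (w, rs, T) (paths s g u n) -> List.Forall (fun l => 0 < l) rs.
Proof.
  intros Hin. destruct (paths_inv n w rs T Hin) as (_ & _ & Hf & _).
  eapply List.Forall_impl; [|exact Hf]. simpl; intros; lra.
Qed.

Lemma paths_totrate_pos n w rs T : In (w, rs, T) (paths s g u n) -> 0 < totrate s g u T.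
Proof. intros Hin. destruct (paths_inv n w rs T Hin) as (_ & _ & _ & Hn & _). apply totrate_pos. lia. Qed.

Lemma paths_next_rates_pos n w rs T : In (w, rs, T) (paths s g u n) ->
  List.Forall (fun l => 0 < l) (rs ++ [totrate s g u T]).
Proof.
  intros Hin. apply List.Forall_app. split; [exact (paths_rates_pos n w rs T Hin)|].
  constructor; [exact (paths_totrate_pos n w rs T Hin) | constructor].
Qed.

Definition Epath (n : nat) (Psi : list R -> tree -> R) : R :=
  lsum (map (fun q => let '(w, rs, T) := q in w * Psi rs T) (paths s g u n)).

Lemma Epath_O Psi : Epath 0 Psi = Psi [] Leaf.
Proof. unfold Epath. simpl. ring. Qed.

Lemma Epath_S n Psi : Epath (S n) Psi = Epath n (fun rs T =>
  rate_sum s g u (fun T' => Psi (rs ++ [totrate s g u T]) T') T / totrate s g u T).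
Proof.
  unfold Epath. simpl paths. rewrite lsum_map_flat_map.
  apply lsum_ext_in. intros [[w rs] T] _. rewrite map_map.
  unfold rate_sum, Rdiv.
  transitivity (w * / totrate s g u T
    * lsum (map (fun p => fst p * Psi (rs ++ [totrate s g u T]) (snd p)) (trans s g u T))); [|ring].
  rewrite <- lsum_scal. apply lsum_ext_in. intros p _. simpl. ring.
Qed.

Lemma Epath_ext_in n Psi1 Psi2 :
  (forall w rs T, In (w, rs, T) (paths s g u n) -> Psi1 rs T = Psi2 rs T) ->
  Epath n Psi1 = Epath n Psi2.
Proof. intros H. apply lsum_ext_in. intros [[w rs] T] Hin. rewrite (H w rs T Hin). reflexivity. Qed.

Lemma Epath_plus n Psi1 Psi2 :
  Epath n (fun rs T => Psi1 rs T + Psi2 rs T) = Epath n Psi1 + Epath n Psi2.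
Proof. unfold Epath. induction (paths s g u n) as [|[[w rs] T] l IH]; simpl; [|rewrite IH]; ring. Qed.

Lemma Epath_minus n Psi1 Psi2 :
  Epath n (fun rs T => Psi1 rs T - Psi2 rs T) = Epath n Psi1 - Epath n Psi2.
Proof. unfold Epath. induction (paths s g u n) as [|[[w rs] T] l IH]; simpl; [|rewrite IH]; ring. Qed.

Lemma Epath_scal n c Psi : Epath n (fun rs T => c * Psi rs T) = c * Epath n Psi.
Proof. unfold Epath. induction (paths s g u n) as [|[[w rs] T] l IH]; simpl; [|rewrite IH]; ring. Qed.

Lemma Epath_le n Psi1 Psi2 :
  (forall w rs T, In (w, rs, T) (paths s g u n) -> Psi1 rs T <= Psi2 rs T) ->
  Epath n Psi1 <= Epath n Psi2.
Proof.
  intros H. apply lsum_le_in. intros [[w rs] T] Hin.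
  destruct (paths_inv n w rs T Hin) as (Hw & _).
  apply Rmult_le_compat_l; auto. eapply H; eauto.
Qed.

Lemma Epath_const n c : Epath n (fun _ _ => c) = c.
Proof.
  induction n as [|n IH]; [apply Epath_O|].
  rewrite Epath_S. transitivity (Epath n (fun _ _ => c)); [|exact IH]. apply Epath_ext_in. intros w rs T Hin.
  rewrite (rate_sum_ext _ _ _ _ (fun _ => 0 + c * 1)), rate_sum_affine, rate_sum_one by (intros; ring).
  pose proof (paths_totrate_pos n w rs T Hin). field. lra.
Qed.

End Jump_chain.

Lemma central_ratio_sq n : central_ratio n * central_ratio n <= 1 / INR (2 * n + 1).
Proof.
  induction n as [|n IH]; [simpl; lra|].
  change (central_ratio (S n)) with (central_ratio n * (INR (2 * n + 1) / INR (2 * n + 2))).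
  set (a := INR (2 * n + 1)).
  assert (Ha : 1 <= a) by (apply (le_INR 1); lia).
  replace (INR (2 * n + 2)) with (a + 1) by (unfold a; rewrite !plus_INR; simpl; ring).
  replace (INR (2 * S n + 1)) with (a + 2)
    by (unfold a; replace (2 * S n + 1)%nat with (2 * n + 1 + 2)%nat by lia; rewrite (plus_INR _ 2); simpl (INR 2); ring).
  replace (central_ratio n * (a / (a + 1)) * (central_ratio n * (a / (a + 1))))
    with (central_ratio n * central_ratio n * (a * a / ((a + 1) * (a + 1)))) by (field; lra).
  apply Rle_trans with (1 / a * (a * a / ((a + 1) * (a + 1)))).
  - apply Rmult_le_compat_r; auto. apply Rdiv_le_0_compat; nra.
  - apply Rmult_le_reg_r with (a * (a + 1) * (a + 1) * (a + 2)); [nra|]. field_simplify; nra.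
Qed.

Lemma is_lim_seq_inv_INR : is_lim_seq (fun n => / INR n) 0.
Proof.
  replace (Finite 0) with (Rbar_inv p_infty) by reflexivity.
  apply is_lim_seq_inv; [apply is_lim_seq_INR | discriminate].
Qed.

Lemma central_ratio_lim : is_lim_seq central_ratio 0.
Proof.
  rewrite <- sqrt_0.
  apply is_lim_seq_le_le_loc with (fun _ => 0) (fun n => sqrt (/ INR n)).
  - exists 1%nat. intros n Hn. split; [apply central_ratio_nonneg|].
    assert (Hn' : 1 <= INR n) by (apply (le_INR 1); lia).
    rewrite <- (sqrt_square (central_ratio n)) by apply central_ratio_nonneg.
    apply sqrt_le_1_alt. eapply Rle_trans; [apply central_ratio_sq|].
    unfold Rdiv. rewrite Rmult_1_l. apply Rinv_le_contravar; [lra|]. apply le_INR. lia.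
  - rewrite sqrt_0. apply is_lim_seq_const.
  - apply is_lim_seq_continuous; [apply continuity_pt_sqrt; lra | apply is_lim_seq_inv_INR].
Qed.

Fixpoint partial_sum (a : nat -> R) (n : nat) : R :=
  match n with O => 0 | S m => partial_sum a m + a m end.

Lemma sum_n_partial_sum a n : sum_n a n = partial_sum a (S n).
Proof.
  induction n as [|n IH].
  - rewrite sum_O. simpl. rewrite Rplus_0_l. reflexivity.
  - rewrite sum_Sn, IH. reflexivity.
Qed.

Lemma partial_sum_le_mono a m n : (forall k, 0 <= a k) -> (m <= n)%nat -> partial_sum a m <= partial_sum a n.
Proof. intros Ha H. induction H as [|n H IH]; simpl; [lra|]. pose proof (Ha n). lra. Qed.

Lemma Series_le_of_partial_sum a B : (forall n, 0 <= a n) -> (forall n, partial_sum a n <= B) ->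
  0 <= Series a <= B.
Proof.
  intros Ha HB.
  assert (Hex : ex_finite_lim_seq (sum_n a)).
  { apply ex_finite_lim_seq_incr with B; intros n; rewrite !sum_n_partial_sum; auto.
    simpl. pose proof (Ha (S n)). lra. }
  destruct Hex as [l Hl]. unfold Series. rewrite (is_lim_seq_unique _ _ Hl). simpl.
  split.
  - apply (is_lim_seq_le (fun _ => 0) (sum_n a) 0 l); auto using is_lim_seq_const.
    intros n. rewrite sum_n_partial_sum. apply Rle_trans with (partial_sum a 0); [simpl; lra|].
    apply partial_sum_le_mono; auto; lia.
  - apply (is_lim_seq_le (sum_n a) (fun _ => B) l B); auto using is_lim_seq_const.
    intros n. rewrite sum_n_partial_sum. auto.
Qed.

Lemma Series_of_partial_sum a (L : R) : is_lim_seq (partial_sum a) L -> Series a = L.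
Proof.
  intros H. unfold Series.
  apply is_lim_seq_incr_1 in H.
  rewrite (is_lim_seq_unique (sum_n a) L); [reflexivity|].
  eapply is_lim_seq_ext; [|exact H]. intros n. rewrite sum_n_partial_sum. reflexivity.
Qed.

Section Jump_times.

Variables s g u r : R.
Hypotheses (hs : 0 < s) (hg : 0 <= g) (hu : 0 <= u) (hr : 0 <= r).

Lemma gterm_Epath y n : gterm s g u r y n
  = Epath s g u n (fun rs T => (hypoCDF rs r - hypoCDF (rs ++ [totrate s g u T]) r) * hanc T y).
Proof. unfold gterm, Epath, lsum. f_equal. apply map_ext. intros [[w rs] T]. ring. Qed.

Lemma Epath_S_rates n (Phi : list R -> R) :
  Epath s g u (S n) (fun rs _ => Phi rs) = Epath s g u n (fun rs T => Phi (rs ++ [totrate s g u T])).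
Proof.
  rewrite Epath_S by auto. apply Epath_ext_in; auto. intros w rs T Hin.
  rewrite (rate_sum_ext _ _ _ _ (fun _ => 0 + Phi (rs ++ [totrate s g u T]) * 1)), rate_sum_affine, rate_sum_one
    by (intros; ring).
  pose proof (paths_totrate_pos s g u hs hg hu n w rs T Hin). field. lra.
Qed.

Definition Pjump (n : nat) : R := Epath s g u n (fun rs _ => hypoCDF rs r).

Lemma Pjump_bounds n : 0 <= Pjump n <= 1.
Proof.
  unfold Pjump. rewrite <- (Epath_const s g u hs hg hu n 0) at 1. rewrite <- (Epath_const s g u hs hg hu n 1).
  split; apply Epath_le; auto; intros w rs T Hin;
    pose proof (hypoCDF_bounds rs r (paths_rates_pos s g u hs hg hu n w rs T Hin) hr); lra.
Qed.

Lemma Pjump_le n : Pjump n <= exp ((s + g + u) * r) * central_ratio n.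
Proof.
  unfold Pjump. rewrite <- (Epath_const s g u hs hg hu n (exp ((s + g + u) * r) * central_ratio n)).
  apply Epath_le; auto. intros w rs T Hin.
  destruct (paths_inv s g u hs hg hu n w rs T Hin) as (_ & _ & _ & _ & Hlap).
  eapply Rle_trans; [apply (hypoCDF_chernoff (s + g + u)); eauto using paths_rates_pos; lra|].
  apply Rmult_le_compat_l; [left; apply exp_pos | exact Hlap].
Qed.

Lemma Pjump_lim : is_lim_seq Pjump 0.
Proof.
  apply is_lim_seq_le_le with (fun _ => 0) (fun n => exp ((s + g + u) * r) * central_ratio n).
  - intros n. split; [apply Pjump_bounds | apply Pjump_le].
  - apply is_lim_seq_const.
  - replace (Finite 0) with (Rbar_mult (exp ((s + g + u) * r)) 0) by (simpl; f_equal; ring).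
    apply is_lim_seq_scal_l, central_ratio_lim.
Qed.

Lemma Pjump_tail n : 1 - Pjump n <= 3 ^ n * exp (- ((s + g + u) / 2 * r)).
Proof.
  unfold Pjump. rewrite <- (Epath_const s g u hs hg hu n 1) at 1.
  rewrite <- (Epath_const s g u hs hg hu n (3 ^ n * exp (- ((s + g + u) / 2 * r)))).
  rewrite <- Epath_minus. apply Epath_le; auto. intros w rs T Hin.
  destruct (paths_inv s g u hs hg hu n w rs T Hin) as (_ & <- & Hf & _).
  apply hypoCDF_tail; auto; [lra|].
  eapply List.Forall_impl; [|exact Hf]. simpl; intros; lra.
Qed.

Lemma gr_one : gr s g u r 1 = 1.
Proof.
  unfold gr. apply Series_of_partial_sum.
  apply is_lim_seq_ext with (fun n => 1 - Pjump n).
  - intros n. induction n as [|n IH]; simpl; [unfold Pjump; rewrite Epath_O; simpl; ring|].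
    rewrite <- IH, gterm_Epath. unfold Pjump. rewrite Epath_S_rates.
    rewrite (Epath_ext_in _ _ _ n
      (fun rs T => (hypoCDF rs r - hypoCDF (rs ++ [totrate s g u T]) r) * hanc T 1)
      (fun rs T => hypoCDF rs r - hypoCDF (rs ++ [totrate s g u T]) r))
      by (intros; rewrite (proj2 (typ_prob_hanc_one T)); ring).
    rewrite Epath_minus. ring.
  - replace (Finite 1) with (Rbar_minus 1 0) by (simpl; f_equal; ring).
    apply is_lim_seq_minus'; [apply is_lim_seq_const | apply Pjump_lim].
Qed.

End Jump_times.

Fixpoint decay (b : R) (n : nat) : R :=
  match n with O => 1 | S m => decay b m * (1 - b / INR (2 * m + 1)) end.

Lemma decay_factor_bounds b m : 0 <= b <= 1 -> 0 <= 1 - b / INR (2 * m + 1) <= 1.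
Proof.
  intros Hb. assert (Hm : 1 <= INR (2 * m + 1)) by (apply (le_INR 1); lia).
  assert (0 <= b / INR (2 * m + 1) <= 1); [|lra].
  split; [apply Rdiv_le_0_compat; lra|].
  apply Rmult_le_reg_r with (INR (2 * m + 1)); [lra|]. field_simplify; lra.
Qed.

Lemma decay_nonneg b n : 0 <= b <= 1 -> 0 <= decay b n.
Proof.
  intros Hb. induction n as [|n IH]; cbn [decay]; [lra|].
  apply Rmult_le_pos; auto. apply decay_factor_bounds, Hb.
Qed.

Lemma decay_le_exp b n : 0 <= b <= 1 ->
  decay b n <= exp (- b * partial_sum (fun k => 1 / INR (2 * k + 1)) n).
Proof.
  intros Hb. induction n as [|n IH]; cbn [decay partial_sum].
  - rewrite Rmult_0_r, exp_0. lra.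
  - replace (- b * (partial_sum (fun k => 1 / INR (2 * k + 1)) n + 1 / INR (2 * n + 1)))
      with (- b * partial_sum (fun k => 1 / INR (2 * k + 1)) n + - (b / INR (2 * n + 1)))
      by (unfold Rdiv; ring).
    rewrite exp_plus. pose proof (decay_factor_bounds b n Hb).
    apply Rmult_le_compat; auto using decay_nonneg; try lra.
    pose proof (exp_ineq1_le (- (b / INR (2 * n + 1)))). lra.
Qed.

Lemma harmonic_exp_ge n : INR n + 1 <= exp (partial_sum (fun k => 1 / INR (k + 1)) n).
Proof.
  induction n as [|n IH]; cbn [partial_sum].
  - rewrite exp_0. simpl. lra.
  - rewrite exp_plus, S_INR.
    replace (INR (n + 1)) with (INR n + 1) by (rewrite plus_INR; reflexivity).
    pose proof (pos_INR n). pose proof (exp_ineq1_le (1 / (INR n + 1))).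
    apply Rle_trans with ((INR n + 1) * (1 + 1 / (INR n + 1))); [right; field; lra|].
    apply Rmult_le_compat; auto; try lra.
    assert (0 < 1 / (INR n + 1)) by (apply Rdiv_lt_0_compat; lra). lra.
Qed.

Lemma odd_harmonic_ge n :
  1 / 2 * partial_sum (fun k => 1 / INR (k + 1)) n <= partial_sum (fun k => 1 / INR (2 * k + 1)) n.
Proof.
  induction n as [|n IH]; cbn [partial_sum]; [lra|].
  assert (Hn : 1 <= INR (n + 1)) by (apply (le_INR 1); lia).
  assert (1 / 2 * (1 / INR (n + 1)) <= 1 / INR (2 * n + 1)); [|lra].
  replace (INR (2 * n + 1)) with (2 * INR (n + 1) - 1) by (rewrite !plus_INR, mult_INR; simpl; ring).
  apply Rmult_le_reg_r with (2 * INR (n + 1) * (2 * INR (n + 1) - 1)); [nra|].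
  field_simplify; lra.
Qed.

(* The factors [1 - b / (2 k + 1)] multiply to [0] because the odd harmonic series diverges. *)
Lemma decay_small b eps : 0 < b <= 1 -> 0 < eps -> exists N, decay b N < eps.
Proof.
  intros Hb He.
  set (K := 2 / b * - ln eps).
  pose proof is_lim_seq_INR as Hlim. apply is_lim_seq_spec in Hlim.
  destruct (Hlim (exp K)) as [N HN]. exists N. specialize (HN N (Nat.le_refl N)).
  set (h := partial_sum (fun k => 1 / INR (k + 1)) N).
  assert (Hh : K < h).
  { apply exp_lt_inv. pose proof (harmonic_exp_ge N). fold h in H. lra. }
  eapply Rle_lt_trans; [apply decay_le_exp; lra|].
  rewrite <- (exp_ln eps He). apply exp_increasing.
  pose proof (odd_harmonic_ge N). fold h in H.
  replace (ln eps) with (- (b / 2) * K) by (unfold K; field; lra). nra.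
Qed.

Section Equilibrium.

Variables s g u y : R.
Hypotheses (hs : 0 < s) (hg : 0 <= g) (hu : 0 <= u) (hy : 0 <= y <= 1) (hd : drift s g u y = 0).

Lemma Epath_S_hanc n (Phi : list R -> R) :
  Epath s g u (S n) (fun rs T => Phi rs * hanc T y)
  = Epath s g u n (fun rs T =>
      Phi (rs ++ [totrate s g u T]) * (1 - kill_rate s g y / totrate s g u T) * hanc T y).
Proof.
  rewrite Epath_S by auto. apply Epath_ext_in; auto. intros w rs T Hin.
  rewrite (rate_sum_ext _ _ _ _ (fun T' => 0 + Phi (rs ++ [totrate s g u T]) * hanc T' y))
    by (intros; ring).
  rewrite rate_sum_affine, hanc_harmonic by exact hd.
  pose proof (paths_totrate_pos s g u hs hg hu n w rs T Hin). field. lra.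
Qed.

Lemma gterm_nonneg r n : 0 <= r -> 0 <= gterm s g u r y n.
Proof.
  intros Hr. rewrite gterm_Epath, <- (Epath_const s g u hs hg hu n 0).
  apply Epath_le; auto. intros w rs T Hin.
  pose proof (hypoCDF_app_le rs (totrate s g u T) r (paths_rates_pos s g u hs hg hu n w rs T Hin)
                (paths_totrate_pos s g u hs hg hu n w rs T Hin) Hr).
  pose proof (hanc_bounds T y hy). nra.
Qed.

Lemma gterm_le_Pjump r n : 0 <= r -> gterm s g u r y n <= Pjump s g u r n - Pjump s g u r (S n).
Proof.
  intros Hr. rewrite gterm_Epath. unfold Pjump. rewrite Epath_S_rates by auto.
  rewrite <- Epath_minus. apply Epath_le; auto. intros w rs T Hin.
  pose proof (hypoCDF_app_le rs (totrate s g u T) r (paths_rates_pos s g u hs hg hu n w rs T Hin)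
                (paths_totrate_pos s g u hs hg hu n w rs T Hin) Hr).
  pose proof (hanc_bounds T y hy). nra.
Qed.

Lemma partial_sum_gterm_le_Pjump r M : 0 <= r -> partial_sum (gterm s g u r y) M <= 1 - Pjump s g u r M.
Proof.
  intros Hr. induction M as [|M IH]; cbn [partial_sum].
  - unfold Pjump. rewrite Epath_O. simpl. lra.
  - pose proof (gterm_le_Pjump r M Hr). lra.
Qed.

Definition hanc_by (r : R) (n : nat) : R := Epath s g u n (fun rs T => hypoCDF rs r * hanc T y).

Definition hanc_at (n : nat) : R := Epath s g u n (fun _ T => hanc T y).

Lemma gterm_add_hanc_by_le r n : 0 <= r -> gterm s g u r y n + hanc_by r (S n) <= hanc_by r n.
Proof.
  intros Hr. unfold hanc_by. rewrite gterm_Epath, Epath_S_hanc.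
  rewrite <- Epath_plus. apply Epath_le; auto. intros w rs T Hin.
  pose proof (paths_totrate_pos s g u hs hg hu n w rs T Hin).
  pose proof (hypoCDF_bounds _ r (paths_next_rates_pos s g u hs hg hu n w rs T Hin) Hr).
  pose proof (hanc_bounds T y hy). pose proof (kill_rate_bounds s g y ltac:(lra) hg hy).
  assert (0 <= kill_rate s g y / totrate s g u T) by (apply Rdiv_le_0_compat; lra).
  assert (0 <= hypoCDF (rs ++ [totrate s g u T]) r * (kill_rate s g y / totrate s g u T) * hanc T y)
    by (apply Rmult_le_pos; [apply Rmult_le_pos|]; lra).
  nra.
Qed.

Lemma partial_sum_gterm_tail r N k : 0 <= r ->
  partial_sum (gterm s g u r y) (N + k) - partial_sum (gterm s g u r y) N + hanc_by r (N + k)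
  <= hanc_by r N.
Proof.
  intros Hr. induction k as [|k IH]; [rewrite Nat.add_0_r; lra|].
  rewrite Nat.add_succ_r. cbn [partial_sum].
  pose proof (gterm_add_hanc_by_le r (N + k) Hr). lra.
Qed.

Lemma hanc_by_bounds r n : 0 <= r -> 0 <= hanc_by r n <= hanc_at n.
Proof.
  intros Hr. unfold hanc_by, hanc_at. rewrite <- (Epath_const s g u hs hg hu n 0).
  split; apply Epath_le; auto; intros w rs T Hin;
    pose proof (hypoCDF_bounds rs r (paths_rates_pos s g u hs hg hu n w rs T Hin) Hr);
    pose proof (hanc_bounds T y hy); nra.
Qed.

Lemma hanc_at_le n : hanc_at n <= y * decay (kill_rate s g y / (s + g + u)) n.
Proof.
  pose proof (kill_rate_bounds s g y ltac:(lra) hg hy) as Hk.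
  set (b := kill_rate s g y / (s + g + u)).
  assert (Hb : 0 <= b <= 1).
  { unfold b. split; [apply Rdiv_le_0_compat; lra|].
    apply Rmult_le_reg_r with (s + g + u); [lra|]. field_simplify; lra. }
  induction n as [|n IH].
  - unfold hanc_at. rewrite Epath_O, hanc_Leaf. simpl. lra.
  - cbn [decay]. pose proof (decay_factor_bounds b n Hb).
    apply Rle_trans with ((1 - b / INR (2 * n + 1)) * hanc_at n); [|nra].
    unfold hanc_at.
    rewrite (Epath_ext_in s g u (S n) _ (fun _ T => 1 * hanc T y)) by (intros; ring).
    rewrite Epath_S_hanc, <- Epath_scal. apply Epath_le; auto. intros w rs T Hin.
    destruct (paths_inv s g u hs hg hu n w rs T Hin) as (_ & _ & _ & Hn & _).
    pose proof (hanc_bounds T y hy).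
    assert (b / INR (2 * n + 1) <= kill_rate s g y / totrate s g u T).
    { unfold b, totrate, Rdiv. rewrite Rmult_assoc, <- Rinv_mult. apply Rmult_le_compat_l; [lra|].
      assert (1 <= INR (nleaves T) <= INR (2 * n + 1)) by (split; [apply (le_INR 1) | apply le_INR]; lia).
      apply Rinv_le_contravar; nra. }
    nra.
Qed.

(* The jumps before the [N]-th contribute at most [1 - Pjump N], the later ones at most the
   expected ancestral probability after [N] jumps. *)
Lemma gr_le r N : 0 <= r ->
  0 <= gr s g u r y
  <= 3 ^ N * exp (- ((s + g + u) / 2 * r)) + y * decay (kill_rate s g y / (s + g + u)) N.
Proof.
  intros Hr. unfold gr. apply Series_le_of_partial_sum; [intros; apply gterm_nonneg, Hr|].
  intros M.
  pose proof (Pjump_tail s g u r hs hg hu Hr N). pose proof (hanc_at_le N).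
  pose proof (hanc_by_bounds r N Hr). pose proof (partial_sum_gterm_le_Pjump r N Hr).
  destruct (Nat.le_ge_cases M N) as [HMN|HMN].
  - pose proof (partial_sum_le_mono _ M N (fun k => gterm_nonneg r k Hr) HMN). lra.
  - destruct (Nat.le_exists_sub N M HMN) as [k [-> _]]. rewrite Nat.add_comm.
    pose proof (partial_sum_gterm_tail r N k Hr). pose proof (hanc_by_bounds r (N + k) Hr). lra.
Qed.

End Equilibrium.

Lemma exp_decay_small a A eps : 0 < a -> 0 < A -> 0 < eps ->
  exists R0, forall r, R0 < r -> A * exp (- (a * r)) < eps.
Proof.
  intros Ha HA He. exists (- ln (eps / A) / a). intros r Hr.
  assert (Hq : 0 < eps / A) by (apply Rdiv_lt_0_compat; lra).
  assert (exp (- (a * r)) < eps / A).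
  { rewrite <- (exp_ln (eps / A) Hq). apply exp_increasing.
    apply Rmult_lt_compat_l with (r := a) in Hr; [|lra].
    replace (a * (- ln (eps / A) / a)) with (- ln (eps / A)) in Hr by (field; lra). lra. }
  apply Rmult_lt_compat_l with (r := A) in H; [|lra].
  replace (A * (eps / A)) with eps in H by (field; lra). exact H.
Qed.

Lemma gr_equilibrium_lim s g u y : 0 < s -> 0 <= g -> 0 <= u -> 0 <= y < 1 -> drift s g u y = 0 ->
  is_lim (fun r => gr s g u r y) p_infty 0.
Proof.
  intros Hs Hg Hu Hy Hd. apply is_lim_spec. intros eps. simpl.
  pose proof (cond_pos eps) as He.
  set (b := kill_rate s g y / (s + g + u)).
  assert (Hb : 0 < b <= 1).
  { pose proof (kill_rate_bounds s g y ltac:(lra) Hg ltac:(lra)) as Hk.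
    assert (0 < kill_rate s g y) by (unfold kill_rate; apply Rmult_lt_0_compat; nra).
    unfold b. split; [apply Rdiv_lt_0_compat; lra|].
    apply Rmult_le_reg_r with (s + g + u); [lra|]. field_simplify; lra. }
  destruct (decay_small b (eps / 2) Hb ltac:(lra)) as [N HN].
  destruct (exp_decay_small ((s + g + u) / 2) (3 ^ N) (eps / 2)) as [R0 HR0];
    [lra | apply pow_lt; lra | lra |].
  exists (Rmax 0 R0). intros r Hr.
  pose proof (Rmax_l 0 R0). pose proof (Rmax_r 0 R0).
  destruct (gr_le s g u y Hs Hg Hu ltac:(lra) Hd r N ltac:(lra)) as [Hgr0 Hgr1].
  pose proof (HR0 r ltac:(lra)). pose proof (decay_nonneg b N ltac:(lra)).
  fold b in Hgr1. rewrite Rminus_0_r, Rabs_pos_eq by exact Hgr0. nra.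
Qed.

Lemma continuous_Rmax_0 x : continuous (Rmax 0) x.
Proof.
  apply (continuous_ext (fun t => / 2 * (t + Rabs t))).
  - intros t. simpl. unfold Rmax. destruct (Rle_dec 0 t).
    + rewrite Rabs_pos_eq by lra. field.
    + rewrite Rabs_left by lra. field.
  - apply (continuous_scal_r (K := R_AbsRing) (V := R_NormedModule)).
    apply (continuous_plus (fun t => t) Rabs); [apply continuous_id | apply continuous_Rabs].
Qed.

Lemma continuous_of_is_derive_on (z : R -> R) (dz : R -> R) t :
  (forall t, 0 <= t -> is_derive z t (dz t)) -> 0 <= t -> continuous z t.
Proof. intros Hz Ht. apply continuous_of_ex_derive. eexists. apply Hz, Ht. Qed.

(* Integrating factor: [(z t - a) * exp (- int_0^t q (z))] is constant.  Since [z] is only known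
   to be differentiable on [[0, +oo)], the integrand is extended by [z (Rmax 0 t)]. *)
Lemma deviation_exp_factor (z q : R -> R) (a : R) :
  (forall x, continuous q x) ->
  (forall t, 0 <= t -> is_derive z t ((z t - a) * q (z t))) ->
  forall t, 0 <= t -> exists E, 0 < E /\ z t - a = (z 0 - a) * E.
Proof.
  intros Hq Hz t Ht.
  set (h := fun x => q (z (Rmax 0 x))).
  assert (Hh : forall x, continuous h x).
  { intros x. apply (continuous_comp (fun x => z (Rmax 0 x)) q); [|apply Hq].
    apply (continuous_comp (Rmax 0) z); [apply continuous_Rmax_0|].
    apply (continuous_of_is_derive_on z _ _ Hz), Rmax_l. }
  set (Q := fun x => RInt h 0 x).
  assert (HQ : forall x, is_derive Q x (h x)).
  { intros x. apply (is_derive_RInt h Q 0 x); [|apply Hh].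
    apply filter_forall. intros b. apply (RInt_correct (V := R_CompleteNormedModule)).
    apply ex_RInt_of_continuous, Hh. }
  set (phi := fun x => (z x - a) * exp (- Q x)).
  assert (Hphi : forall x, 0 <= x -> is_derive phi x 0).
  { intros x Hx. unfold phi.
    evar (l : R).
    assert (Hl : is_derive (fun x => (z x - a) * exp (- Q x)) x l).
    { unfold l. auto_derive; [|reflexivity]. split; [eexists; apply Hz; auto|]. split; auto. eexists; apply HQ. }
    replace 0 with l; auto. unfold l.
    replace (Derive (fun x => z x) x) with ((z x - a) * q (z x)) by (symmetry; apply is_derive_unique, Hz, Hx).
    replace (Derive (fun x => Q x) x) with (h x) by (symmetry; apply is_derive_unique, HQ).
    unfold h. rewrite Rmax_right by exact Hx. ring. }
  destruct (MVT_gen phi 0 t (fun _ => 0)) as [c [_ Hc]].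
  - intros x Hx. rewrite Rmin_left in Hx by auto. apply Hphi. lra.
  - intros x Hx. rewrite Rmin_left, Rmax_right in Hx by auto.
    apply continuity_pt_filterlim, (continuous_of_is_derive_on phi (fun _ => 0)); [apply Hphi | lra].
  - exists (exp (Q t)). split; [apply exp_pos|].
    assert (HQ0 : Q 0 = 0) by (unfold Q; rewrite RInt_point; reflexivity).
    unfold phi in Hc. rewrite HQ0, Ropp_0, exp_0, Rmult_0_l in Hc.
    replace (z t - a) with ((z t - a) * exp (- Q t) * exp (Q t))
      by (rewrite Rmult_assoc, <- exp_plus, Rplus_opp_l, exp_0; ring).
    f_equal. lra.
Qed.

Lemma solution_side_preserved (z q : R -> R) (a : R) :
  (forall x, continuous q x) ->
  (forall t, 0 <= t -> is_derive z t ((z t - a) * q (z t))) ->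
  forall t, 0 <= t -> (z 0 < a -> z t < a) /\ (a < z 0 -> a < z t) /\ (z 0 = a -> z t = a).
Proof.
  intros Hq Hz t Ht. destruct (deviation_exp_factor z q a Hq Hz t Ht) as [E [HE Hzt]].
  repeat split; intros; nra.
Qed.

Section Increasing_solution.

Variables (z f : R -> R) (b : R).
Hypotheses (Hf : forall x, continuous f x) (Hz : forall t, 0 <= t -> is_derive z t (f (z t))).

Lemma solution_mvt t1 t2 : 0 <= t1 <= t2 ->
  exists c, t1 <= c <= t2 /\ z t2 - z t1 = f (z c) * (t2 - t1).
Proof.
  intros Ht. destruct (MVT_gen z t1 t2 (fun t => f (z t))) as [c [Hc E]].
  - intros x Hx. rewrite Rmin_left in Hx by lra. apply Hz. lra.
  - intros x Hx. rewrite Rmin_left, Rmax_right in Hx by lra.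
    apply continuity_pt_filterlim, (continuous_of_is_derive_on z _ _ Hz). lra.
  - rewrite Rmin_left, Rmax_right in Hc by lra. exists c. auto.
Qed.

Hypotheses (Hb : forall t, 0 <= t -> z t < b) (Hpos : forall t, 0 <= t -> 0 < f (z t)).

Lemma solution_nondecreasing t1 t2 : 0 <= t1 <= t2 -> z t1 <= z t2.
Proof.
  intros Ht. destruct (solution_mvt t1 t2 Ht) as [c [Hc E]].
  pose proof (Hpos c ltac:(lra)). nra.
Qed.

Hypothesis (Hreg : forall x, z 0 <= x < b -> 0 < f x).

(* On [[z 0, b - eps]] the speed is bounded below by the minimum of [f], so [z] passes [b - eps]. *)
Lemma solution_exceeds eps : 0 < eps -> exists T, 0 <= T /\ b - eps < z T.
Proof.
  intros He. apply NNPP. intros Hnot.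
  assert (Hall : forall T, 0 <= T -> z T <= b - eps).
  { intros T HT. apply Rnot_lt_le. intros H. apply Hnot. exists T. auto. }
  destruct (continuity_ab_min f (z 0) (b - eps)) as [xm [Hxm Hxmr]].
  { apply Hall. lra. }
  { intros x _. apply continuity_pt_filterlim, Hf. }
  assert (Hm : 0 < f xm) by (apply Hreg; lra).
  set (T := (b - eps - z 0) / f xm + 1).
  assert (HT : 0 <= T) by (unfold T; assert (0 <= (b - eps - z 0) / f xm) by (apply Rdiv_le_0_compat; lra); lra).
  destruct (solution_mvt 0 T ltac:(lra)) as [c [Hc E]].
  assert (Hzc : z 0 <= z c <= b - eps) by (split; [apply solution_nondecreasing | apply Hall]; lra).
  pose proof (Hxm (z c) Hzc). pose proof (Hall T HT).
  assert (f xm * T = b - eps - z 0 + f xm) by (unfold T; field; lra).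
  rewrite Rminus_0_r in E. nra.
Qed.

Lemma is_lim_increasing_solution : is_lim z p_infty b.
Proof.
  apply is_lim_spec. intros eps. simpl.
  destruct (solution_exceeds eps (cond_pos eps)) as [T [HT HzT]].
  exists T. intros x Hx.
  pose proof (solution_nondecreasing T x ltac:(lra)). pose proof (Hb x ltac:(lra)).
  rewrite Rabs_left1; lra.
Qed.

End Increasing_solution.

Lemma is_lim_decreasing_solution (z f : R -> R) (b : R) :
  (forall x, continuous f x) ->
  (forall t, 0 <= t -> is_derive z t (f (z t))) ->
  (forall t, 0 <= t -> b < z t) ->
  (forall t, 0 <= t -> f (z t) < 0) ->
  (forall x, b < x <= z 0 -> f x < 0) ->
  is_lim z p_infty b.
Proof.
  intros Hf Hz Hb Hneg Hreg.
  assert (H : is_lim (fun t => - z t) p_infty (- b)).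
  { apply (is_lim_increasing_solution (fun t => - z t) (fun x => - f (- x))).
    - intros x. apply (continuous_comp (fun x => - x) (fun x => - f x)).
      + apply continuous_of_ex_derive. auto_derive. auto.
      + apply (continuous_opp f), Hf.
    - intros t Ht. rewrite Ropp_involutive. apply (is_derive_opp z), Hz, Ht.
    - intros t Ht. specialize (Hb t Ht). lra.
    - intros t Ht. rewrite Ropp_involutive. specialize (Hneg t Ht). lra.
    - intros x Hx. assert (f (- x) < 0) by (apply Hreg; lra). lra. }
  apply is_lim_opp in H. simpl in H. rewrite Ropp_involutive in H.
  eapply is_lim_ext; [|exact H]. intros. simpl. ring.
Qed.

Definition drift_quad (s g u x : R) : R := g * x * x - (s + g) * x + u.

Lemma drift_factor s g u x : drift s g u x = (1 - x) * drift_quad s g u x.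
Proof. unfold drift, drift_quad. ring. Qed.

Lemma drift_quad_root_factor s g u a x : drift_quad s g u a = 0 ->
  drift_quad s g u x = (x - a) * (g * (x + a) - (s + g)).
Proof.
  unfold drift_quad. intros Ha. replace u with (- (g * a * a) + (s + g) * a) by lra. ring.
Qed.

Lemma continuous_drift_quad s g u x : continuous (drift_quad s g u) x.
Proof. apply continuous_of_ex_derive. unfold drift_quad. auto_derive. auto. Qed.

Lemma continuous_drift s g u x : continuous (drift s g u) x.
Proof. apply continuous_of_ex_derive. unfold drift. auto_derive. auto. Qed.

Lemma drift_quad_case_i s g u : 0 < s -> 0 <= g -> 0 < u -> (u < s \/ (u = s /\ s < g)) ->
  exists b, 0 < b < 1 /\ drift_quad s g u b = 0 /\ (forall x, x < b -> 0 < drift_quad s g u x) /\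
            (forall x, b < x < 1 -> drift_quad s g u x < 0).
Proof.
  intros Hs Hg Hu Hc.
  assert (Hex : exists b, 0 < b < 1 /\ drift_quad s g u b = 0).
  { destruct Hc as [Hc|[-> Hsg]].
    - destruct (IVT (fun x => - drift_quad s g u x) 0 1) as [b [Hb Hb0]];
        [intros x; apply continuity_pt_filterlim, (continuous_opp (drift_quad s g u)), continuous_drift_quad
        | lra | unfold drift_quad; lra | unfold drift_quad; lra |].
      exists b. assert (drift_quad s g u b = 0) as Hb' by lra. split; auto.
      split; apply Rnot_le_lt; intros H;
        [assert (b = 0) by lra | assert (b = 1) by lra]; subst; unfold drift_quad in Hb'; lra.
    - exists (s / g). split; [split|].
      + apply Rdiv_lt_0_compat; lra.
      + apply Rmult_lt_reg_r with g; [lra|]. field_simplify; lra.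
      + unfold drift_quad. field. lra. }
  destruct Hex as [b [Hb Hpb]]. exists b. do 2 (split; auto).
  pose proof (fun x => drift_quad_root_factor s g u b x Hpb) as Hfac.
  assert (Hsl : forall x, x < 1 -> g * (x + b) - (s + g) < 0).
  { intros x Hx. pose proof (Hfac 1) as H1. unfold drift_quad at 1 in H1.
    replace (g * (1 + b) - (s + g)) with (g * b - s) in H1 by ring.
    assert (Hgb : g * b - s <= 0) by (destruct (Rle_lt_dec (g * b - s) 0); nra).
    destruct Hc as [Hc|[-> Hsg]].
    - assert (g * b - s < 0) by (destruct (Rle_lt_dec 0 (g * b - s)); nra). nra.
    - nra. }
  split; intros x Hx; rewrite Hfac; pose proof (Hsl x ltac:(lra)); nra.
Qed.

Lemma drift_quad_case_ii s g u : 0 < s -> 0 <= g ->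
  (Rbar_lt (ucheck s g) (Finite u) \/ (g <= s /\ s <= u /\ Rbar_le (Finite u) (ucheck s g))) ->
  forall x, x < 1 -> 0 < drift_quad s g u x.
Proof.
  intros Hs Hg Hc x Hx. destruct Hc as [Hc|[Hgs [Hsu _]]].
  - unfold ucheck in Hc. destruct (Req_EM_T g 0) as [E|E]; simpl in Hc; [contradiction|].
    assert (Hg' : 0 < g) by (destruct Hg; [assumption | exfalso; apply E; auto]).
    assert (Hd : (s + g) * (s + g) < 4 * g * u).
    { apply Rmult_lt_compat_l with (r := 4 * g) in Hc; [|lra].
      replace (4 * g * (1 / g * ((s + g) / 2 * ((s + g) / 2 * 1)))) with ((s + g) * (s + g)) in Hc by (field; auto). lra. }
    assert (E4 : 4 * g * drift_quad s g u x = (2 * g * x - (s + g)) ^ 2 + (4 * g * u - (s + g) * (s + g)))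
      by (unfold drift_quad; ring).
    assert (0 <= (2 * g * x - (s + g)) ^ 2) by (apply pow2_ge_0).
    apply (Rmult_lt_reg_l (4 * g)); lra.
  - replace (drift_quad s g u x) with ((u - s) + (1 - x) * ((s - g) + g * (1 - x))) by (unfold drift_quad; ring).
    assert (0 < (s - g) + g * (1 - x)) by (destruct (Req_dec g 0) as [->|]; nra).
    assert (0 < (1 - x) * ((s - g) + g * (1 - x))) by (apply Rmult_lt_0_compat; lra). lra.
Qed.

Lemma drift_quad_case_iii s g u : 0 < s -> s < g -> s < u -> Rbar_le (Finite u) (ucheck s g) ->
  let r1 := / 2 * (1 + s / g - sqrt (Defs.sigma s g u)) in
  0 < r1 <= ybar3 s g u /\ ybar3 s g u < 1 /\
  (forall x, drift_quad s g u x = g * (x - r1) * (x - ybar3 s g u)).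
Proof.
  intros Hs Hsg Hsu Hc r1.
  unfold ucheck in Hc. destruct (Req_EM_T g 0) as [E|E]; [lra|]. simpl in Hc.
  set (k := s / g). set (w := u / g).
  assert (Hk : 0 < k < 1).
  { unfold k. split; [apply Rdiv_lt_0_compat; lra|]. apply Rmult_lt_reg_r with g; [lra|]. field_simplify; lra. }
  assert (Hw : k < w) by (unfold k, w; apply Rmult_lt_compat_r; [apply Rinv_0_lt_compat|]; lra).
  assert (Hsig : Defs.sigma s g u = (1 + k) ^ 2 - 4 * w) by (unfold Defs.sigma, k, w; field; auto).
  assert (Hsig0 : 0 <= Defs.sigma s g u).
  { rewrite Hsig. apply Rmult_le_compat_l with (r := 4 / g) in Hc; [|apply Rdiv_le_0_compat; lra].
    replace (4 / g * (1 / g * ((s + g) / 2 * ((s + g) / 2 * 1)))) with ((1 + k) ^ 2) in Hc by (unfold k; field; auto).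
    replace (4 / g * u) with (4 * w) in Hc by (unfold w; field; auto). lra. }
  set (q := sqrt (Defs.sigma s g u)) in *.
  assert (Hq0 : 0 <= q) by apply sqrt_pos.
  assert (Hqq : q * q = (1 + k) ^ 2 - 4 * w) by (unfold q; rewrite sqrt_sqrt; auto).
  assert (Hr1 : r1 = / 2 * (1 + k - q)) by reflexivity.
  assert (Hr2 : ybar3 s g u = / 2 * (1 + k + q)) by reflexivity.
  rewrite Hr1, Hr2. repeat split; try nra.
  intros x. unfold drift_quad.
  replace s with (g * k) by (unfold k; field; auto). replace u with (g * w) by (unfold w; field; auto).
  replace w with (((1 + k) ^ 2 - q * q) / 4) by lra. field.
Qed.

Lemma drift_quad_case_iii_signs s g u : 0 < s -> s < g -> s < u -> Rbar_le (Finite u) (ucheck s g) ->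
  exists r1, 0 < r1 <= ybar3 s g u /\ ybar3 s g u < 1 /\
    drift_quad s g u r1 = 0 /\ drift_quad s g u (ybar3 s g u) = 0 /\
    (forall x, x < r1 -> 0 < drift_quad s g u x) /\
    (forall x, r1 < x < ybar3 s g u -> drift_quad s g u x < 0) /\
    (forall x, ybar3 s g u < x -> 0 < drift_quad s g u x).
Proof.
  intros Hs Hsg Hsu Hc.
  destruct (drift_quad_case_iii s g u Hs Hsg Hsu Hc) as [Hr [Hr2 Hfac]].
  eexists. split; [exact Hr|]. split; [exact Hr2|].
  repeat split; intros; rewrite Hfac; try ring.
  - assert (0 < (x - / 2 * (1 + s / g - sqrt (Defs.sigma s g u))) * (x - ybar3 s g u)) by nra. nra.
  - assert ((x - / 2 * (1 + s / g - sqrt (Defs.sigma s g u))) * (x - ybar3 s g u) < 0) by nra. nra.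
  - assert (0 < (x - / 2 * (1 + s / g - sqrt (Defs.sigma s g u))) * (x - ybar3 s g u)) by nra. nra.
Qed.

Lemma ginf_yinf_one_of_lim s g u (y : R -> R -> R) y0 : 0 < s -> 0 <= g -> 0 <= u ->
  is_lim (y y0) p_infty 1 -> ginf_yinf s g u y y0 1.
Proof.
  intros Hs Hg Hu Hl. exists 1. split; auto.
  apply (is_lim_ext_loc (fun _ => 1)); [|apply is_lim_const].
  exists 0. intros r Hr. symmetry. apply gr_one; auto; lra.
Qed.

Lemma ginf_yinf_zero_of_lim s g u (y : R -> R -> R) y0 a : 0 < s -> 0 <= g -> 0 <= u ->
  0 <= a < 1 -> drift_quad s g u a = 0 -> is_lim (y y0) p_infty a -> ginf_yinf s g u y y0 0.
Proof.
  intros Hs Hg Hu Ha Hroot Hl. exists a. split; auto.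
  apply gr_equilibrium_lim; auto. rewrite drift_factor, Hroot. ring.
Qed.

Section Trajectories.

Variables (s g u : R) (y : R -> R -> R).
Hypothesis hy : IsSolution s g u y.

Lemma solution_one_side y0 t : 0 <= y0 <= 1 -> 0 <= t ->
  (y0 < 1 -> y y0 t < 1) /\ (y0 = 1 -> y y0 t = 1).
Proof.
  intros Hy0 Ht. destruct (hy y0 Hy0) as [H0 Hd].
  rewrite <- H0 at 1 3.
  destruct (solution_side_preserved (y y0) (fun x => - drift_quad s g u x) 1) with (t := t)
    as (Hlt & _ & Heq); auto.
  - intros x. apply (continuous_opp (drift_quad s g u)), continuous_drift_quad.
  - intros t' Ht'. replace ((y y0 t' - 1) * - drift_quad s g u (y y0 t')) with (drift s g u (y y0 t'))
      by (rewrite drift_factor; ring). auto.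
Qed.

Lemma solution_lt_one y0 t : 0 <= y0 < 1 -> 0 <= t -> y y0 t < 1.
Proof. intros Hy0 Ht. apply (solution_one_side y0 t); auto; lra. Qed.

Lemma solution_root_side y0 a t : 0 <= y0 <= 1 -> drift_quad s g u a = 0 -> 0 <= t ->
  (y0 < a -> y y0 t < a) /\ (a < y0 -> a < y y0 t) /\ (y0 = a -> y y0 t = a).
Proof.
  intros Hy0 Ha Ht. destruct (hy y0 Hy0) as [H0 Hd].
  rewrite <- H0 at 1 3 5.
  apply (solution_side_preserved (y y0) (fun x => (1 - x) * (g * (x + a) - (s + g))) a); auto.
  - intros x. apply continuous_of_ex_derive. auto_derive. auto.
  - intros t' Ht'. replace ((y y0 t' - a) * ((1 - y y0 t') * (g * (y y0 t' + a) - (s + g))))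
      with (drift s g u (y y0 t')) by (rewrite drift_factor, (drift_quad_root_factor s g u a) by exact Ha; ring).
    auto.
Qed.

Lemma is_lim_solution_one y0 : 0 <= y0 < 1 ->
  (forall x, y0 <= x < 1 -> 0 < drift_quad s g u x) ->
  (forall t, 0 <= t -> 0 < drift_quad s g u (y y0 t)) -> is_lim (y y0) p_infty 1.
Proof.
  intros Hy0 Hreg Hpos. destruct (hy y0 ltac:(lra)) as [H0 Hd].
  apply (is_lim_increasing_solution (y y0) (drift s g u)); auto using continuous_drift.
  - intros t Ht. apply solution_lt_one; auto.
  - intros t Ht. rewrite drift_factor.
    pose proof (solution_lt_one y0 t Hy0 Ht). pose proof (Hpos t Ht). nra.
  - intros x Hx. rewrite drift_factor. rewrite H0 in Hx. pose proof (Hreg x Hx). nra.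
Qed.

Lemma is_lim_solution_root y0 : 0 <= y0 <= 1 -> drift_quad s g u y0 = 0 -> is_lim (y y0) p_infty y0.
Proof.
  intros Hy0 Hroot. apply (is_lim_ext_loc (fun _ => y0)); [|apply is_lim_const].
  exists 0. intros t Ht. symmetry. apply (solution_root_side y0 y0 t); auto; lra.
Qed.

Lemma is_lim_attracting_root y0 a U : 0 <= y0 < U -> a <= U <= 1 -> drift_quad s g u a = 0 ->
  (forall x, x < a -> 0 < drift_quad s g u x) -> (forall x, a < x < U -> drift_quad s g u x < 0) ->
  (forall t, 0 <= t -> y y0 t < U) -> is_lim (y y0) p_infty a.
Proof.
  intros Hy0 HU Ha Hlo Hhi HyU. destruct (hy y0 ltac:(lra)) as [H0 Hd].
  pose proof (fun t Ht => solution_root_side y0 a t ltac:(lra) Ha Ht) as Hside.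
  destruct (Rtotal_order y0 a) as [Hlt|[<-|Hgt]].
  - apply (is_lim_increasing_solution (y y0) (drift s g u)); auto using continuous_drift.
    + intros t Ht. apply (Hside t Ht), Hlt.
    + intros t Ht. rewrite drift_factor. pose proof (proj1 (Hside t Ht) Hlt).
      pose proof (Hlo (y y0 t) H). pose proof (HyU t Ht). nra.
    + intros x Hx. rewrite drift_factor. pose proof (Hlo x ltac:(lra)). nra.
  - apply is_lim_solution_root; auto; lra.
  - apply (is_lim_decreasing_solution (y y0) (drift s g u)); auto using continuous_drift.
    + intros t Ht. apply (Hside t Ht), Hgt.
    + intros t Ht. rewrite drift_factor. pose proof (proj1 (proj2 (Hside t Ht)) Hgt).
      pose proof (HyU t Ht). pose proof (Hhi (y y0 t) ltac:(lra)). nra.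
    + intros x Hx. rewrite drift_factor. rewrite H0 in Hx. pose proof (Hhi x ltac:(lra)). nra.
Qed.

Hypotheses (hs : 0 < s) (hg : 0 <= g) (hu : 0 < u).

Lemma ginf_yinf_at_one : ginf_yinf s g u y 1 1.
Proof.
  apply ginf_yinf_one_of_lim; try lra.
  apply (is_lim_ext_loc (fun _ => 1)); [|apply is_lim_const].
  exists 0. intros t Ht. symmetry. apply (solution_one_side 1 t); lra.
Qed.

Lemma ginf_yinf_case_i y0 : 0 <= y0 < 1 -> (u < s \/ (u = s /\ s < g)) -> ginf_yinf s g u y y0 0.
Proof.
  intros Hy0 Hc.
  destruct (drift_quad_case_i s g u hs hg hu Hc) as [b [Hb [Hroot [Hlo Hhi]]]].
  apply (ginf_yinf_zero_of_lim _ _ _ _ _ b); auto; try lra.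
  apply (is_lim_attracting_root y0 b 1); auto; try lra.
  intros t Ht. apply solution_lt_one; auto.
Qed.

Lemma ginf_yinf_case_ii y0 : 0 <= y0 < 1 ->
  (Rbar_lt (ucheck s g) (Finite u) \/ (g <= s /\ s <= u /\ Rbar_le (Finite u) (ucheck s g))) ->
  ginf_yinf s g u y y0 1.
Proof.
  intros Hy0 Hc. pose proof (drift_quad_case_ii s g u hs hg Hc) as Hpos.
  apply ginf_yinf_one_of_lim; try lra.
  apply is_lim_solution_one; auto.
  - intros x Hx. apply Hpos. lra.
  - intros t Ht. apply Hpos, solution_lt_one; auto.
Qed.

Lemma ginf_yinf_case_iii_below y0 : 0 <= y0 <= ybar3 s g u ->
  s < g -> s < u -> Rbar_le (Finite u) (ucheck s g) -> ginf_yinf s g u y y0 0.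
Proof.
  intros Hy0 Hsg Hsu Hc.
  destruct (drift_quad_case_iii_signs s g u hs Hsg Hsu Hc)
    as (r1 & Hr1 & Hr2 & Hroot1 & Hroot2 & Hlo & Hmid & _).
  destruct (Rle_lt_or_eq_dec y0 (ybar3 s g u) (proj2 Hy0)) as [Hlt|Heq].
  - apply (ginf_yinf_zero_of_lim _ _ _ _ _ r1); auto; try lra.
    apply (is_lim_attracting_root y0 r1 (ybar3 s g u)); auto; try lra.
    intros t Ht. apply (solution_root_side y0 (ybar3 s g u) t); auto; lra.
  - apply (ginf_yinf_zero_of_lim _ _ _ _ _ y0); auto; try lra.
    + rewrite Heq. exact Hroot2.
    + apply is_lim_solution_root; [lra|]. rewrite Heq. exact Hroot2.
Qed.

Lemma ginf_yinf_case_iii_above y0 : ybar3 s g u < y0 < 1 ->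
  s < g -> s < u -> Rbar_le (Finite u) (ucheck s g) -> ginf_yinf s g u y y0 1.
Proof.
  intros Hy0 Hsg Hsu Hc.
  destruct (drift_quad_case_iii_signs s g u hs Hsg Hsu Hc)
    as (r1 & Hr1 & Hr2 & _ & Hroot2 & _ & _ & Hhi).
  apply ginf_yinf_one_of_lim; try lra.
  apply is_lim_solution_one; [lra | intros x Hx; apply Hhi; lra |].
  intros t Ht. apply Hhi, (solution_root_side y0 (ybar3 s g u) t); auto; lra.
Qed.

End Trajectories.

Theorem corollary2p41 (s g u : R) (y : R -> R -> R)
  (hs : 0 < s) (hg : 0 <= g) (hu : 0 < u) (hy : IsSolution s g u y) :
  ginf_yinf s g u y 1 1 /\
  forall y0 : R, 0 <= y0 < 1 ->
    ((u < s \/ (u = s /\ s < g)) -> ginf_yinf s g u y y0 0) /\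
    ((Rbar_lt (ucheck s g) (Finite u) \/
      (g <= s /\ s <= u /\ Rbar_le (Finite u) (ucheck s g))) ->
       ginf_yinf s g u y y0 1) /\
    ((s < g /\ s < u /\ Rbar_le (Finite u) (ucheck s g)) ->
       (y0 <= ybar3 s g u -> ginf_yinf s g u y y0 0) /\
       (ybar3 s g u < y0 -> ginf_yinf s g u y y0 1)).
Proof.
  split; [exact (ginf_yinf_at_one s g u y hy hs hg hu)|].
  intros y0 Hy0. split; [|split].
  - apply ginf_yinf_case_i; auto.
  - apply ginf_yinf_case_ii; auto.
  - intros (Hsg & Hsu & Hc). split; intros Hy3.
    + apply ginf_yinf_case_iii_below; auto; lra.
    + apply ginf_yinf_case_iii_above; auto; lra.
Qed.
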